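(* Let $r\ge1$, $\mu\in\mathcal P_r$, $n\in\mathbb N$ and $\mathbf p\in\Pi_n$, with $P_i=\sum_{j=1}^ip_j$ ($P_0=0$). Then there exists $\mathbf x\in\Xi_n$ minimizing $\mathbf y\mapsto d_r(\delta^{\mathbf p}_{\mathbf y},\mu)$ over $\Xi_n$. Moreover: (a) For $r=1$: $\mathbf x\in\Xi_n$ is such a minimizer if and only if, for every $i=1,\dots,n$, $P_{i-1}<P_i$ implies $x_i\in Q^{F_\mu}_{(P_{i-1}+P_i)/2}$. (b) For $r>1$: $\mathbf x\in\Xi_n$ is such a minimizer if and only if, for every $i=1,\dots,n$, $P_{i-1}<P_i$ implies $x_i=\tau_r^{f_i}$, where $f_i$ is the restriction of $F_\mu^{-1}$ to $[P_{i-1},P_i]$.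
   Context: $\mathcal P$ denotes the set of Borel probability measures on $\mathbb R$; $\mathcal P_r=\{\mu\in\mathcal P:\int|x|^r{\rm d}\mu(x)<\infty\}$. For $\mu\in\mathcal P$, $F_\mu(x)=\mu(]-\infty,x])$ and $F_\mu^{-1}(t)=\sup\{x: F_\mu(x)\le t\}$, $t\in]0,1[$. $d_r(\mu,\nu)=\big(\int_0^1|F_\mu^{-1}(t)-F_\nu^{-1}(t)|^r{\rm d}t\big)^{1/r}$. $\Xi_n=\{\mathbf x\in\mathbb R^n:x_1\le\dots\le x_n\}$, $\Pi_n=\{\mathbf p\in\mathbb R^n:p_i\ge0,\sum_ip_i=1\}$, $\delta^{\mathbf p}_{\mathbf x}=\sum_ip_i\delta_{x_i}$. For $s\in]0,1[$, $Q^{F_\mu}_s=[\inf\{x\in\mathbb R:F_\mu(x)\ge s\},\ \sup\{x\in\mathbb R:F_\mu(x)\le s\}]$ (the set of $s$-quantiles of $\mu$). For a bounded non-degenerate interval $J$ and $f\in L^r(J)$ with $r>1$, $\tau_r^f$ denotes the unique real number minimizing $t\mapsto\|f-t\|_{L^r(J)}$. *)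

From Stdlib Require Import Reals Lra Lia Classical ClassicalEpsilon.
Open Scope R_scope.

(** Classical supremum / infimum of a set of reals (junk value 0 if no lub). *)
Definition Rsup (S : R -> Prop) : R := epsilon (inhabits 0) (fun L => is_lub S L).
Definition Rinf (S : R -> Prop) : R := - Rsup (fun x => S (- x)).

Definition rpow (x y : R) : R := if Rle_dec x 0 then 0 else Rpower x y.

(** A Borel probability measure on R, represented by its distribution function
    F(x) = mu(]-oo,x]): nondecreasing, right-continuous, F(-oo)=0, F(+oo)=1. *)
Definition is_cdf (F : R -> R) : Prop :=
  (forall x y, x <= y -> F x <= F y) /\
  (forall x eps, 0 < eps -> exists delta, 0 < delta /\
       forall y, x <= y < x + delta -> Rabs (F y - F x) < eps) /\
  (forall eps, 0 < eps -> exists M, forall x, x <= - M -> Rabs (F x) < eps) /\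
  (forall eps, 0 < eps -> exists M, forall x, M <= x -> Rabs (F x - 1) < eps).

Definition Finv (F : R -> R) (t : R) : R := Rsup (fun x => F x <= t).

Definition in_Q (F : R -> R) (s x : R) : Prop :=
  Rinf (fun y => s <= F y) <= x /\ x <= Rsup (fun y => F y <= s).

Definition RInt_is (g : R -> R) (c d v : R) : Prop :=
  exists pr : Riemann_integrable g c d, RiemannInt pr = v.
Definition compact_ints (g : R -> R) (a b : R) : R -> Prop :=
  fun v => exists c d, a < c /\ c <= d /\ d < b /\ RInt_is g c d v.

(** (Improper) integral over ]a,b[ of a nonnegative, locally Riemann
    integrable function: supremum of its integrals over compact subintervals
    (equals the Lebesgue integral by monotone convergence). *)
Definition impInt (g : R -> R) (a b : R) : R := Rsup (compact_ints g a b).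

(** mu in P_r : int |x|^r dmu = int_0^1 |F^{-1}(t)|^r dt < oo. *)
Definition finite_moment (r : R) (F : R -> R) : Prop :=
  exists B, is_upper_bound (compact_ints (fun t => rpow (Rabs (Finv F t)) r) 0 1) B.

(** Wasserstein-type distance d_r via quantile functions. *)
Definition d_r (r : R) (F G : R -> R) : R :=
  rpow (impInt (fun t => rpow (Rabs (Finv F t - Finv G t)) r) 0 1) (1 / r).

(** Vectors are indexed 1..n (functions nat -> R). *)
Fixpoint Psum (p : nat -> R) (i : nat) : R :=
  match i with O => 0 | S k => Psum p k + p (S k) end.

Definition in_Xi (n : nat) (x : nat -> R) : Prop :=
  forall i, (1 <= i)%nat -> (i < n)%nat -> x i <= x (S i).

Definition in_Pi (n : nat) (p : nat -> R) : Prop :=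
  (forall i, (1 <= i <= n)%nat -> 0 <= p i) /\ Psum p n = 1.

(** Distribution function of delta^p_x = sum_i p_i delta_{x_i}. *)
Fixpoint disc_cdf (n : nat) (p x : nat -> R) (z : R) : R :=
  match n with
  | O => 0
  | S k => disc_cdf k p x z + (if Rle_dec (x (S k)) z then p (S k) else 0)
  end.

Definition is_minimizer (r : R) (F : R -> R) (n : nat) (p x : nat -> R) : Prop :=
  forall y, in_Xi n y -> d_r r (disc_cdf n p x) F <= d_r r (disc_cdf n p y) F.

Definition Lr_dist (r a b : R) (f : R -> R) (t : R) : R :=
  rpow (impInt (fun u => rpow (Rabs (f u - t)) r) a b) (1 / r).

Definition is_unique_min (r a b : R) (f : R -> R) (t : R) : Prop :=
  (forall s, Lr_dist r a b f t <= Lr_dist r a b f s) /\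
  (forall s, (forall s', Lr_dist r a b f s <= Lr_dist r a b f s') -> s = t).

Definition tau (r a b : R) (f : R -> R) : R :=
  epsilon (inhabits 0) (fun t => is_unique_min r a b f t).

(* For x in Xi_n, the quantile function of delta^p_x equals x_i on [P_{i-1}, P_i[,
   so d_r(delta^p_x, mu)^r is the sum, over the blocks of positive mass, of the
   block costs int_{P_{i-1}}^{P_i} |F^{-1} - x_i|^r.  Each block cost is convex,
   continuous and coercive in x_i, hence has a minimizer.  For r = 1, moving x_i
   across a quantile at the midpoint of the block trades a gain on one half of
   the block against an equal loss on the other, so the minimizers are exactly
   these quantiles; for r > 1 strict convexity makes the minimizer unique, i.e. it
   is tau_r.  In both cases the blockwise minimizers can be chosen nondecreasing
   in i (they lie between the values of F^{-1} at the block endpoints), so some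
   point of Xi_n minimizes all block costs at once, and the minimizers of d_r are
   exactly the points minimizing every block cost.  Integrals over ]0, 1[ are
   suprema of Riemann integrals over compact subintervals, on which F^{-1} is
   monotone and hence Riemann integrable. *)

From Stdlib Require Import Reals Lra Lia ClassicalEpsilon
  FunctionalExtensionality PropExtensionality RList.
From Coquelicot Require Import Coquelicot.
Open Scope R_scope.
Implicit Types g h : R -> R.

(** * Riemann integrability of monotone functions *)

Lemma IsStepFun_ext_interior g h a b :
  a <= b -> IsStepFun g a b -> (forall x, a < x < b -> g x = h x) -> IsStepFun h a b.
Proof.
  intros Hab [l [lf Hl]] Heq. exists l, lf.
  destruct Hl as [Hord [Hfst [Hlst [Hlen Hcst]]]].
  repeat split; try assumption.
  intros i Hi x Hx. unfold constant_D_eq, open_interval in *.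
  rewrite <- (Hcst i Hi x Hx). symmetry; apply Heq.
  assert (Hin : forall j, (j < length l)%nat -> a <= pos_Rl l j <= b).
  { intros j Hj. destruct (RList_P6 l) as [Hmono _].
    rewrite Rmin_left in Hfst by lra. rewrite Rmax_right in Hlst by lra.
    split.
    - rewrite <- Hfst. apply Hmono; auto; lia.
    - rewrite <- Hlst. apply Hmono; auto; lia. }
  pose proof (Hin i ltac:(lia)). pose proof (Hin (S i) ltac:(lia)). lra.
Qed.

Definition step_approx h a b e := exists phi psi : StepFun a b,
  (forall t, a <= t <= b -> Rabs (h t - phi t) <= psi t) /\ RiemannInt_SF psi <= e.

Lemma step_approx_weaken h a b e e' : step_approx h a b e -> e <= e' -> step_approx h a b e'.
Proof. intros [phi [psi [H1 H2]]] He. exists phi, psi. split; auto; lra. Qed.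

Lemma step_approx_nondecr h a b : a <= b ->
  (forall s t, a <= s -> s <= t -> t <= b -> h s <= h t) ->
  step_approx h a b ((b - a) * (h b - h a)).
Proof.
  intros Hab Hm.
  exists (mkStepFun (StepFun_P4 a b (h a))), (mkStepFun (StepFun_P4 a b (h b - h a))).
  split.
  - intros t Ht; simpl; unfold fct_cte.
    assert (h a <= h t) by (apply Hm; lra). assert (h t <= h b) by (apply Hm; lra).
    rewrite Rabs_right; lra.
  - rewrite StepFun_P18. lra.
Qed.

Lemma step_approx_glue h a b c e1 e2 : a <= b -> b <= c ->
  step_approx h a b e1 -> step_approx h b c e2 -> step_approx h a c (e1 + e2).
Proof.
  intros Hab Hbc [phi1 [psi1 [H1 H1']]] [phi2 [psi2 [H2 H2']]].
  set (glue := fun u v : R -> R => fun x => if Rle_dec x b then u x else v x).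
  assert (Hl : forall u v, IsStepFun u a b -> IsStepFun (glue u v) a b).
  { intros u v Hu. apply IsStepFun_ext_interior with u; auto.
    intros x Hx; unfold glue; destruct (Rle_dec x b); [reflexivity|lra]. }
  assert (Hr : forall u v, IsStepFun v b c -> IsStepFun (glue u v) b c).
  { intros u v Hv. apply IsStepFun_ext_interior with v; auto.
    intros x Hx; unfold glue; destruct (Rle_dec x b); [lra|reflexivity]. }
  pose proof (Hl _ phi2 (pre phi1)) as Pab. pose proof (Hr phi1 _ (pre phi2)) as Pbc.
  pose proof (Hl _ psi2 (pre psi1)) as Qab. pose proof (Hr psi1 _ (pre psi2)) as Qbc.
  exists (mkStepFun (StepFun_P46 Pab Pbc)), (mkStepFun (StepFun_P46 Qab Qbc)). split.
  - intros t Ht; simpl; unfold glue; destruct (Rle_dec t b).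
    + apply H1; lra.
    + apply H2; lra.
  - rewrite <- (StepFun_P43 Qab Qbc (StepFun_P46 Qab Qbc)).
    assert (E1 : RiemannInt_SF (mkStepFun Qab) = RiemannInt_SF psi1).
    { apply Rle_antisym; apply StepFun_P37; auto; simpl; intros x Hx;
      unfold glue; destruct (Rle_dec x b); lra. }
    assert (E2 : RiemannInt_SF (mkStepFun Qbc) = RiemannInt_SF psi2).
    { apply Rle_antisym; apply StepFun_P37; auto; simpl; intros x Hx;
      unfold glue; destruct (Rle_dec x b); lra. }
    rewrite E1, E2; lra.
Qed.

(* On a grid of [N] cells of width [del] the error terms telescope. *)
Lemma step_approx_nondecr_grid h a del (N : nat) : 0 <= del ->
  (forall s t, a <= s -> s <= t -> t <= a + INR N * del -> h s <= h t) ->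
  step_approx h a (a + INR N * del) (del * (h (a + INR N * del) - h a)).
Proof.
  intros Hd. induction N as [|N IH]; intros Hm.
  - change (INR 0) with 0 in *. replace (a + 0 * del) with a in * by ring.
    eapply step_approx_weaken; [apply step_approx_nondecr; [lra|]|right; ring].
    intros; apply Hm; lra.
  - rewrite S_INR in *. pose proof (pos_INR N).
    replace (del * (h (a + (INR N + 1) * del) - h a)) with
      (del * (h (a + INR N * del) - h a) + ((a + (INR N + 1) * del) - (a + INR N * del)) *
        (h (a + (INR N + 1) * del) - h (a + INR N * del))) by ring.
    apply step_approx_glue with (a + INR N * del); try nra.
    + apply IH. intros; apply Hm; nra.
    + apply step_approx_nondecr; [nra|]. intros; apply Hm; nra.
Qed.

Lemma Riemann_integrable_nondecr h a b : a <= b ->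
  (forall s t, a <= s -> s <= t -> t <= b -> h s <= h t) -> Riemann_integrable h a b.
Proof.
  intros Hab Hm eps. pose proof (cond_pos eps) as Heps.
  assert (Hhab : h a <= h b) by (apply Hm; lra).
  assert (Hex : step_approx h a b (eps / 2)).
  { destruct (INR_archimed (eps / 2) ((b - a) * (h b - h a)) ltac:(lra)) as [N HN].
    destruct N as [|N']; [change (INR 0) with 0 in HN; nra|].
    set (N := S N') in *.
    assert (HN0 : 0 < INR N) by (apply lt_0_INR; lia).
    set (del := (b - a) / INR N).
    assert (Hb : a + INR N * del = b) by (unfold del; field; lra).
    assert (Hdel : 0 <= del) by (unfold del; apply Rdiv_le_0_compat; lra).
    pose proof (step_approx_nondecr_grid h a del N Hdel) as HA. rewrite Hb in HA.
    eapply step_approx_weaken; [apply HA; intros; apply Hm; lra|].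
    apply Rmult_le_reg_l with (INR N); auto.
    replace (INR N * (del * (h b - h a))) with ((b - a) * (h b - h a)) by (unfold del; field; lra).
    lra. }
  apply constructive_indefinite_description in Hex. destruct Hex as [phi Hphi].
  apply constructive_indefinite_description in Hphi. destruct Hphi as [psi [H1 H2]].
  exists phi, psi. split.
  - intros t; rewrite Rmin_left, Rmax_right by lra. apply H1.
  - assert (0 <= RiemannInt_SF psi).
    { replace 0 with (RiemannInt_SF (mkStepFun (StepFun_P4 a b 0)))
        by (rewrite StepFun_P18; ring).
      apply StepFun_P37; auto. intros x Hx; simpl; unfold fct_cte.
      eapply Rle_trans; [apply Rabs_pos| apply H1; lra]. }
    rewrite Rabs_right; lra.
Qed.

Lemma ex_RInt_nondecr h a b : a <= b ->
  (forall s t, a <= s -> s <= t -> t <= b -> h s <= h t) -> ex_RInt h a b.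
Proof. intros; apply ex_RInt_Reals_1, Riemann_integrable_nondecr; auto. Qed.

Lemma ex_RInt_nonincr h a b : a <= b ->
  (forall s t, a <= s -> s <= t -> t <= b -> h t <= h s) -> ex_RInt h a b.
Proof.
  intros Hab Hm.
  assert (E : ex_RInt (fun t => - h t) a b).
  { apply ex_RInt_nondecr; auto. intros s t H1 H2 H3; specialize (Hm s t H1 H2 H3); lra. }
  apply (ex_RInt_opp (V:=R_NormedModule)) in E.
  eapply ex_RInt_ext; [|exact E]. intros x _. simpl. unfold opp; simpl. ring.
Qed.

(** * Distribution and quantile functions *)

Lemma Rsup_is_lub (S : R -> Prop) : (exists x, S x) -> (exists B, is_upper_bound S B) ->
  is_lub S (Rsup S).
Proof.
  intros [x Hx] [B HB].
  destruct (completeness S (ex_intro _ B HB) (ex_intro _ x Hx)) as [m Hm].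
  unfold Rsup. apply epsilon_spec. exists m; exact Hm.
Qed.

Section Quantiles.
Variable F : R -> R.
Hypothesis HF : is_cdf F.

Lemma cdf_nondecr x y : x <= y -> F x <= F y.
Proof. destruct HF as [H _]; auto. Qed.

Lemma cdf_right_cont x eps : 0 < eps -> exists delta, 0 < delta /\
  forall y, x <= y < x + delta -> Rabs (F y - F x) < eps.
Proof. destruct HF as [_ [H _]]; auto. Qed.

Lemma cdf_lt_far_left t : 0 < t -> exists M, forall x, x <= M -> F x < t.
Proof.
  intros Ht. destruct HF as [_ [_ [H _]]]. destruct (H t Ht) as [M HM].
  exists (- M). intros x Hx. specialize (HM x Hx). apply Rabs_def2 in HM. lra.
Qed.

Lemma cdf_gt_far_right t : t < 1 -> exists M, forall x, M <= x -> t < F x.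
Proof.
  intros Ht. destruct HF as [_ [_ [_ H]]]. destruct (H (1 - t) ltac:(lra)) as [M HM].
  exists M. intros x Hx. specialize (HM x Hx). apply Rabs_def2 in HM. lra.
Qed.

Lemma Finv_is_lub t : 0 < t < 1 -> is_lub (fun x => F x <= t) (Finv F t).
Proof.
  intros Ht. apply Rsup_is_lub.
  - destruct (cdf_lt_far_left t ltac:(lra)) as [M HM]. exists M. left; apply HM; lra.
  - destruct (cdf_gt_far_right t ltac:(lra)) as [M HM]. exists M. intros x Hx.
    destruct (Rle_lt_dec x M); auto. specialize (HM x ltac:(lra)). lra.
Qed.

Lemma Finv_ge t y : 0 < t < 1 -> F y <= t -> y <= Finv F t.
Proof. intros Ht Hy. apply (Finv_is_lub t Ht); auto. Qed.

Lemma Finv_le t y : 0 < t < 1 -> t < F y -> Finv F t <= y.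
Proof.
  intros Ht Hy. apply (Finv_is_lub t Ht). intros z Hz.
  destruct (Rle_lt_dec z y); auto. pose proof (cdf_nondecr y z ltac:(lra)). lra.
Qed.

Lemma Finv_nondecr s t : 0 < s -> s <= t -> t < 1 -> Finv F s <= Finv F t.
Proof.
  intros H1 H2 H3. apply (Finv_is_lub s ltac:(lra)). intros z Hz. apply Finv_ge; lra.
Qed.

Lemma Finv_gt t y : 0 < t < 1 -> F y < t -> y < Finv F t.
Proof.
  intros Ht Hy. destruct (cdf_right_cont y (t - F y) ltac:(lra)) as [d [Hd Hd']].
  specialize (Hd' (y + d / 2) ltac:(lra)). apply Rabs_def2 in Hd'.
  pose proof (Finv_ge t (y + d / 2) Ht ltac:(lra)). lra.
Qed.

Lemma in_Q_iff s x : 0 < s < 1 ->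
  in_Q F s x <-> s <= F x /\ forall w, w < x -> F w <= s.
Proof.
  intros Hs. unfold in_Q, Rinf.
  set (A := fun y => s <= F (- y)).
  assert (HA : is_lub A (Rsup A)).
  { apply Rsup_is_lub.
    - destruct (cdf_gt_far_right s ltac:(lra)) as [M HM]. exists (- M). unfold A.
      rewrite Ropp_involutive. left; apply HM; lra.
    - destruct (cdf_lt_far_left s ltac:(lra)) as [M HM]. exists (- M). intros y Hy.
      destruct (Rle_lt_dec y (- M)); auto. specialize (HM (- y) ltac:(lra)). unfold A in Hy. lra. }
  pose proof (Finv_is_lub s Hs) as HU. unfold Finv in HU.
  destruct HA as [HA1 HA2]. destruct HU as [HU1 HU2].
  split.
  - intros [H1 H2]. split.
    + apply Rnot_lt_le; intro Hlt.
      destruct (cdf_right_cont x (s - F x) ltac:(lra)) as [d [Hd Hd']].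
      enough (is_upper_bound A (- (x + d))) by (specialize (HA2 _ H); lra).
      intros y Hy. unfold A in Hy. apply Rnot_lt_le; intro Hy2.
      destruct (Rle_lt_dec (- y) x).
      * pose proof (cdf_nondecr (- y) x ltac:(lra)). lra.
      * specialize (Hd' (- y) ltac:(lra)). apply Rabs_def2 in Hd'. lra.
    + intros w Hw. apply Rnot_lt_le; intro Hlt.
      enough (is_upper_bound (fun y => F y <= s) w) by (specialize (HU2 _ H); lra).
      intros z Hz. apply Rnot_lt_le; intro Hz2. pose proof (cdf_nondecr w z ltac:(lra)). lra.
  - intros [H1 H2]. split.
    + enough (A (- x)) by (specialize (HA1 _ H); lra).
      unfold A; rewrite Ropp_involutive; lra.
    + apply Rnot_lt_le; intro Hlt.
      set (w := (Rsup (fun y => F y <= s) + x) / 2).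
      specialize (HU1 w (H2 w ltac:(unfold w; lra))). unfold w in HU1. lra.
Qed.

Lemma Finv_in_Q t : 0 < t < 1 -> in_Q F t (Finv F t).
Proof.
  intros Ht. apply in_Q_iff; auto. split.
  - apply Rnot_lt_le; intro Hlt. pose proof (Finv_gt t (Finv F t) Ht Hlt). lra.
  - intros w Hw. apply Rnot_lt_le; intro Hlt. pose proof (Finv_le t w Ht Hlt). lra.
Qed.

End Quantiles.

(** * Real powers *)

Lemma rpow_Rpower x y : 0 < x -> rpow x y = Rpower x y.
Proof. intros H; unfold rpow; destruct (Rle_dec x 0); [lra|auto]. Qed.

Lemma rpow_nonpos_base x y : x <= 0 -> rpow x y = 0.
Proof. intros H; unfold rpow; destruct (Rle_dec x 0); [auto|lra]. Qed.

Lemma rpow_ge0 x y : 0 <= rpow x y.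
Proof. unfold rpow; destruct (Rle_dec x 0); [lra|left; apply exp_pos]. Qed.

Lemma rpow_gt0 x y : 0 < x -> 0 < rpow x y.
Proof. intros; rewrite rpow_Rpower; auto; apply exp_pos. Qed.

Lemma rpow_1 x : 0 <= x -> rpow x 1 = x.
Proof.
  intros H; destruct (Req_dec x 0) as [->|Hn]; [apply rpow_nonpos_base; lra|].
  rewrite rpow_Rpower by lra; apply Rpower_1; lra.
Qed.

Lemma rpow_plus x a b : 0 < x -> rpow x (a + b) = rpow x a * rpow x b.
Proof. intros; rewrite !rpow_Rpower by lra; apply Rpower_plus. Qed.

Lemma rpow_le_compat c x y : 0 < c -> 0 <= x <= y -> rpow x c <= rpow y c.
Proof.
  intros Hc [H1 H2]. destruct (Req_dec x 0) as [->|Hn].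
  - rewrite rpow_nonpos_base by lra; apply rpow_ge0.
  - rewrite !rpow_Rpower by lra. apply Rle_Rpower_l; lra.
Qed.

Lemma rpow_lt_compat c x y : 0 < c -> 0 <= x < y -> rpow x c < rpow y c.
Proof.
  intros Hc [H1 H2]. destruct (Req_dec x 0) as [->|Hn].
  - rewrite rpow_nonpos_base by lra; apply rpow_gt0; lra.
  - rewrite !rpow_Rpower by lra. apply Rlt_Rpower_l; lra.
Qed.

Lemma rpow_le_reg c x y : 0 < c -> 0 <= y -> rpow x c <= rpow y c -> x <= y.
Proof.
  intros Hc Hy H. apply Rnot_lt_le; intro Hlt.
  pose proof (rpow_lt_compat c y x Hc ltac:(lra)). lra.
Qed.

Lemma rpow_mult_base c x y : 0 <= x -> 0 <= y -> rpow (x * y) c = rpow x c * rpow y c.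
Proof.
  intros Hx Hy. destruct (Req_dec x 0) as [->|Hnx].
  { rewrite Rmult_0_l, !(rpow_nonpos_base 0) by lra. ring. }
  destruct (Req_dec y 0) as [->|Hny].
  { rewrite Rmult_0_r, !(rpow_nonpos_base 0) by lra. ring. }
  rewrite !rpow_Rpower by nra. symmetry; apply Rpower_mult_distr; lra.
Qed.

Lemma rpow_ge_base r x : 1 <= r -> 1 <= x -> x <= rpow x r.
Proof.
  intros Hr Hx. rewrite rpow_Rpower by lra.
  rewrite <- (Rpower_1 x) at 1 by lra. apply Rle_Rpower; lra.
Qed.

Lemma rpow_le_base r x : 1 <= r -> 0 <= x <= 1 -> rpow x r <= x.
Proof.
  intros Hr Hx. destruct (Req_dec x 0) as [->|Hn]; [rewrite rpow_nonpos_base; lra|].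
  rewrite rpow_Rpower by lra. unfold Rpower. rewrite <- (exp_ln x) at 2 by lra.
  assert (ln x <= 0) by (rewrite <- ln_1; apply ln_le; lra).
  destruct (Req_dec r 1) as [->|Hr1]; [right; f_equal; ring|].
  destruct (Req_dec (ln x) 0) as [E|E]; [rewrite E, Rmult_0_r; lra|].
  left; apply exp_increasing; nra.
Qed.

Lemma continuity_pt_eps (f : R -> R) x0 :
  (forall eps, 0 < eps -> exists del, 0 < del /\
     forall x, Rabs (x - x0) < del -> Rabs (f x - f x0) < eps) ->
  continuity_pt f x0.
Proof.
  intros H eps Heps. destruct (H eps Heps) as [d [Hd Hd']]. exists d; split; auto.
  intros x [_ Hx]. apply Hd'. exact Hx.
Qed.

Lemma rpow_continuity_pt r x0 : 1 <= r -> continuity_pt (fun x => rpow x r) x0.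
Proof.
  intros Hr. destruct (Rlt_le_dec 0 x0) as [Hp|Hn].
  - assert (Hc : continuity_pt (fun x => Rpower x r) x0).
    { apply derivable_continuous_pt. eexists. apply derivable_pt_lim_power; auto. }
    apply continuity_pt_eps. intros eps Heps. destruct (Hc eps Heps) as [d [Hd Hd']].
    exists (Rmin d x0). split; [apply Rmin_pos; lra|]. intros x Hx.
    assert (Hx1 : Rabs (x - x0) < d) by (eapply Rlt_le_trans; [exact Hx| apply Rmin_l]).
    assert (Hx2 : Rabs (x - x0) < x0) by (eapply Rlt_le_trans; [exact Hx| apply Rmin_r]).
    apply Rabs_def2 in Hx2.
    rewrite !rpow_Rpower by lra. destruct (Req_dec x x0) as [->|Hne].
    + unfold Rminus; rewrite Rplus_opp_r, Rabs_R0; lra.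
    + apply (Hd' x). split; [split; [exact I| auto]|]. exact Hx1.
  - destruct (Req_dec x0 0) as [->|Hneg].
    + apply continuity_pt_eps. intros eps Heps. exists (Rmin 1 eps).
      split; [apply Rmin_pos; lra|]. intros x Hx.
      rewrite (rpow_nonpos_base 0), !Rminus_0_r in * by lra.
      pose proof (Rmin_l 1 eps). pose proof (Rmin_r 1 eps).
      destruct (Rle_lt_dec x 0).
      * rewrite rpow_nonpos_base, Rabs_R0 by lra; lra.
      * rewrite Rabs_right in Hx by lra.
        pose proof (rpow_le_base r x Hr ltac:(lra)). pose proof (rpow_ge0 x r).
        rewrite Rabs_right; lra.
    + apply continuity_pt_eps. intros eps Heps. exists (- x0). split; [lra|].
      intros x Hx. apply Rabs_def2 in Hx. rewrite !rpow_nonpos_base by lra.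
      rewrite Rminus_0_r, Rabs_R0; lra.
Qed.

Lemma Rpower_tangent r s m : 1 <= r -> 0 < s -> 0 < m ->
  Rpower m r + r * Rpower m (r - 1) * (s - m) <= Rpower s r /\
  (1 < r -> s <> m -> Rpower m r + r * Rpower m (r - 1) * (s - m) < Rpower s r).
Proof.
  intros Hr Hs Hm.
  set (phi := fun x => Rpower x r - r * Rpower m (r - 1) * x).
  set (dphi := fun c => r * Rpower c (r - 1) - r * Rpower m (r - 1)).
  assert (Hd : forall c, 0 < c -> derivable_pt_lim phi c (dphi c)).
  { intros c Hc. apply derivable_pt_lim_minus.
    - apply derivable_pt_lim_power; auto.
    - rewrite <- (Rmult_1_r (r * Rpower m (r - 1))) at 2.
      apply derivable_pt_lim_scal, derivable_pt_lim_id. }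
  enough (phi m <= phi s /\ (1 < r -> s <> m -> phi m < phi s)) by (unfold phi in *; lra).
  destruct (Rtotal_order s m) as [Hlt|[->|Hgt]].
  - destruct (MVT_cor2 phi dphi s m Hlt ltac:(intros c Hc; apply Hd; lra)) as [c [E Hc]].
    assert (Rpower c (r - 1) <= Rpower m (r - 1)) by (apply Rle_Rpower_l; lra).
    split.
    + assert (0 <= r * (Rpower m (r - 1) - Rpower c (r - 1)) * (m - s))
        by (apply Rmult_le_pos; [apply Rmult_le_pos|]; lra).
      unfold dphi in E; lra.
    + intros Hr1 _. assert (Rpower c (r - 1) < Rpower m (r - 1)) by (apply Rlt_Rpower_l; lra).
      assert (0 < r * (Rpower m (r - 1) - Rpower c (r - 1)) * (m - s))
        by (apply Rmult_lt_0_compat; [apply Rmult_lt_0_compat|]; lra).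
      unfold dphi in E; lra.
  - split; [lra|]. intros _ H; congruence.
  - destruct (MVT_cor2 phi dphi m s Hgt ltac:(intros c Hc; apply Hd; lra)) as [c [E Hc]].
    assert (Rpower m (r - 1) <= Rpower c (r - 1)) by (apply Rle_Rpower_l; lra).
    split.
    + assert (0 <= r * (Rpower c (r - 1) - Rpower m (r - 1)) * (s - m))
        by (apply Rmult_le_pos; [apply Rmult_le_pos|]; lra).
      unfold dphi in E; lra.
    + intros Hr1 _. assert (Rpower m (r - 1) < Rpower c (r - 1)) by (apply Rlt_Rpower_l; lra).
      assert (0 < r * (Rpower c (r - 1) - Rpower m (r - 1)) * (s - m))
        by (apply Rmult_lt_0_compat; [apply Rmult_lt_0_compat|]; lra).
      unfold dphi in E; lra.
Qed.

Lemma rpow_tangent r s m : 1 <= r -> 0 <= s -> 0 < m ->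
  rpow m r + r * rpow m (r - 1) * (s - m) <= rpow s r /\
  (1 < r -> s <> m -> rpow m r + r * rpow m (r - 1) * (s - m) < rpow s r).
Proof.
  intros Hr Hs Hm. destruct (Req_dec s 0) as [->|Hs0].
  - assert (Hmr : rpow m r = rpow m (r - 1) * m).
    { rewrite <- (rpow_1 m) at 3 by lra. rewrite <- rpow_plus by lra. f_equal; ring. }
    pose proof (rpow_gt0 m (r - 1) Hm) as HP. rewrite (rpow_nonpos_base 0), Hmr by lra.
    assert (0 < rpow m (r - 1) * m) by (apply Rmult_lt_0_compat; lra).
    split; intros; nra.
  - rewrite !rpow_Rpower by lra. apply Rpower_tangent; lra.
Qed.

Lemma rpow_convex r l s1 s2 : 1 <= r -> 0 <= l <= 1 -> 0 <= s1 -> 0 <= s2 ->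
  rpow (l * s1 + (1 - l) * s2) r <= l * rpow s1 r + (1 - l) * rpow s2 r.
Proof.
  intros Hr Hl H1 H2. set (m := l * s1 + (1 - l) * s2).
  destruct (Req_dec m 0) as [Hm0|Hm0].
  { rewrite Hm0, rpow_nonpos_base by lra.
    pose proof (rpow_ge0 s1 r). pose proof (rpow_ge0 s2 r). nra. }
  assert (Hm : 0 < m) by (unfold m in *; nra).
  destruct (rpow_tangent r s1 m Hr H1 Hm) as [T1 _].
  destruct (rpow_tangent r s2 m Hr H2 Hm) as [T2 _].
  set (k := r * rpow m (r - 1)) in *.
  assert (E : l * (s1 - m) + (1 - l) * (s2 - m) = 0) by (unfold m; ring).
  assert (l * (rpow m r + k * (s1 - m)) <= l * rpow s1 r) by (apply Rmult_le_compat_l; lra).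
  assert ((1 - l) * (rpow m r + k * (s2 - m)) <= (1 - l) * rpow s2 r)
    by (apply Rmult_le_compat_l; lra).
  assert (l * (rpow m r + k * (s1 - m)) + (1 - l) * (rpow m r + k * (s2 - m)) = rpow m r)
    by (transitivity (rpow m r + k * (l * (s1 - m) + (1 - l) * (s2 - m))); [ring|rewrite E; ring]).
  lra.
Qed.

Lemma rpow_midpoint_lt r s1 s2 : 1 < r -> 0 <= s1 -> 0 <= s2 -> s1 <> s2 ->
  rpow ((s1 + s2) / 2) r < (rpow s1 r + rpow s2 r) / 2.
Proof.
  intros Hr H1 H2 Hn. set (m := (s1 + s2) / 2).
  assert (Hm : 0 < m) by (unfold m; destruct (Req_dec s1 0); lra).
  destruct (rpow_tangent r s1 m ltac:(lra) H1 Hm) as [_ T1].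
  destruct (rpow_tangent r s2 m ltac:(lra) H2 Hm) as [_ T2].
  specialize (T1 Hr ltac:(unfold m; lra)). specialize (T2 Hr ltac:(unfold m; lra)).
  set (k := r * rpow m (r - 1)) in *.
  assert (k * (s1 - m) + k * (s2 - m) = 0) by (unfold m; field).
  lra.
Qed.

Lemma rpow_abs_convex r l u y1 y2 : 1 <= r -> 0 <= l <= 1 ->
  rpow (Rabs (u - (l * y1 + (1 - l) * y2))) r <=
  l * rpow (Rabs (u - y1)) r + (1 - l) * rpow (Rabs (u - y2)) r.
Proof.
  intros Hr Hl. eapply Rle_trans; [|apply rpow_convex; auto; apply Rabs_pos].
  apply rpow_le_compat; [lra|]. split; [apply Rabs_pos|].
  replace (u - (l * y1 + (1 - l) * y2)) with (l * (u - y1) + (1 - l) * (u - y2)) by ring.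
  eapply Rle_trans; [apply Rabs_triang|].
  rewrite !Rabs_mult, (Rabs_right l), (Rabs_right (1 - l)) by lra. lra.
Qed.

Lemma rpow_abs_midpoint_lt r u y1 y2 : 1 < r -> y1 <> y2 ->
  rpow (Rabs (u - (y1 + y2) / 2)) r < (rpow (Rabs (u - y1)) r + rpow (Rabs (u - y2)) r) / 2.
Proof.
  intros Hr Hn. destruct (Req_dec (Rabs (u - y1)) (Rabs (u - y2))) as [E|E].
  - assert (Hu : u = (y1 + y2) / 2) by (revert E; split_Rabs; intros; lra).
    rewrite Hu, Rminus_diag, Rabs_R0, rpow_nonpos_base, <- Hu, E by lra.
    assert (0 < rpow (Rabs (u - y2)) r) by (apply rpow_gt0, Rabs_pos_lt; lra).
    lra.
  - eapply Rle_lt_trans; [|apply rpow_midpoint_lt; auto; apply Rabs_pos].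
    apply rpow_le_compat; [lra|]. split; [apply Rabs_pos|]. split_Rabs; lra.
Qed.

Lemma rpow_abs_add_le r x y : 1 <= r ->
  rpow (Rabs (x + y)) r <= rpow 2 r * (rpow (Rabs x) r + rpow (Rabs y) r).
Proof.
  intros Hr. pose proof (Rabs_pos x). pose proof (Rabs_pos y).
  apply Rle_trans with (rpow (2 * (/ 2 * Rabs x + (1 - / 2) * Rabs y)) r).
  { apply rpow_le_compat; [lra|]. split; [apply Rabs_pos|].
    replace (2 * (/ 2 * Rabs x + (1 - / 2) * Rabs y)) with (Rabs x + Rabs y) by field.
    apply Rabs_triang. }
  rewrite rpow_mult_base by lra. apply Rmult_le_compat_l; [apply rpow_ge0|].
  pose proof (rpow_convex r (/ 2) (Rabs x) (Rabs y) Hr ltac:(lra) ltac:(lra) ltac:(lra)).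
  pose proof (rpow_ge0 (Rabs x) r). pose proof (rpow_ge0 (Rabs y) r). lra.
Qed.

Lemma convex_increment_le (phi : R -> R) y e :
  (forall l u v, 0 <= l <= 1 -> phi (l * u + (1 - l) * v) <= l * phi u + (1 - l) * phi v) ->
  0 <= e <= 1 ->
  let D := Rabs (phi (y + 1) - phi y) + Rabs (phi y - phi (y - 1)) in
  Rabs (phi (y + e) - phi y) <= e * D /\ Rabs (phi (y - e) - phi y) <= e * D.
Proof.
  intros Hc He D. destruct (Req_dec e 0) as [->|He0].
  { rewrite Rplus_0_r, Rminus_0_r, Rminus_diag, Rabs_R0. unfold D. split_Rabs; lra. }
  assert (Hinv : 0 <= / (1 + e) <= 1).
  { split; [left; apply Rinv_0_lt_compat; lra|]. rewrite <- Rinv_1. apply Rinv_le_contravar; lra. }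
  assert (Chord : forall s, phi (y + s * e) <= (1 - e) * phi y + e * phi (y + s)).
  { intros s. replace (y + s * e) with (e * (y + s) + (1 - e) * y) by ring.
    rewrite (Rplus_comm ((1 - e) * phi y)). apply Hc; lra. }
  assert (Below : forall s, (1 + e) * phi y <= phi (y + s * e) + e * phi (y - s)).
  { intros s. assert (H := Hc (/ (1 + e)) (y + s * e) (y - s) Hinv).
    replace (/ (1 + e) * (y + s * e) + (1 - / (1 + e)) * (y - s)) with y in H by (field; lra).
    apply Rmult_le_compat_l with (r := 1 + e) in H; [|lra].
    replace ((1 + e) * (/ (1 + e) * phi (y + s * e) + (1 - / (1 + e)) * phi (y - s)))
      with (phi (y + s * e) + e * phi (y - s)) in H by (field; lra). lra. }
  pose proof (Chord 1) as U1. pose proof (Below 1) as L1.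
  pose proof (Chord (-1)) as U2. pose proof (Below (-1)) as L2.
  replace (y + 1 * e) with (y + e) in * by ring. replace (y + -1 * e) with (y - e) in * by ring.
  replace (y + -1) with (y - 1) in * by ring. replace (y - -1) with (y + 1) in * by ring.
  unfold D. split; split_Rabs; nra.
Qed.

Lemma convex_continuity_pt (phi : R -> R) y :
  (forall l u v, 0 <= l <= 1 -> phi (l * u + (1 - l) * v) <= l * phi u + (1 - l) * phi v) ->
  continuity_pt phi y.
Proof.
  intros Hc. set (D := Rabs (phi (y + 1) - phi y) + Rabs (phi y - phi (y - 1))).
  assert (HD : 0 <= D) by (unfold D; split_Rabs; lra).
  apply continuity_pt_eps. intros eps Heps. exists (Rmin 1 (eps / (D + 1))). split.
  { apply Rmin_pos; [lra|]. apply Rdiv_lt_0_compat; lra. }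
  intros x Hx. pose proof (Rmin_l 1 (eps / (D + 1))). pose proof (Rmin_r 1 (eps / (D + 1))).
  assert (Hk : Rabs (x - y) * D < eps).
  { apply Rle_lt_trans with (eps / (D + 1) * D); [apply Rmult_le_compat_r; lra|].
    apply Rlt_le_trans with (eps / (D + 1) * (D + 1)); [|right; field; lra].
    apply Rmult_lt_compat_l; [apply Rdiv_lt_0_compat|]; lra. }
  destruct (Rle_lt_dec y x).
  - rewrite Rabs_right in Hx, Hk by lra.
    destruct (convex_increment_le phi y (x - y) Hc ltac:(lra)) as [B _].
    replace (y + (x - y)) with x in B by ring. fold D in B. lra.
  - rewrite Rabs_left in Hx, Hk by lra.
    destruct (convex_increment_le phi y (y - x) Hc ltac:(lra)) as [_ B].
    replace (y - (y - x)) with x in B by ring. fold D in B. lra.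
Qed.

Lemma RInt_point_R g c : RInt g c c = 0.
Proof. apply (RInt_point (V:=R_CompleteNormedModule)). Qed.

Lemma RInt_const_R c d (k : R) : RInt (fun _ => k) c d = k * (d - c).
Proof.
  rewrite (RInt_const (V:=R_CompleteNormedModule)). simpl.
  unfold scal; simpl; unfold mult; simpl. ring.
Qed.

Lemma ex_RInt_const_R c d (k : R) : ex_RInt (fun _ => k) c d.
Proof. apply (ex_RInt_const (V:=R_NormedModule)). Qed.

Lemma RInt_plus_R g h c d : ex_RInt g c d -> ex_RInt h c d ->
  RInt (fun t => g t + h t) c d = RInt g c d + RInt h c d.
Proof. intros; apply (RInt_plus (V:=R_CompleteNormedModule)); auto. Qed.

Lemma ex_RInt_plus_R g h c d : ex_RInt g c d -> ex_RInt h c d ->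
  ex_RInt (fun t => g t + h t) c d.
Proof. intros; apply (ex_RInt_plus (V:=R_NormedModule)); auto. Qed.

Lemma RInt_scal_R g c d k : ex_RInt g c d -> RInt (fun t => k * g t) c d = k * RInt g c d.
Proof. intros; apply (RInt_scal (V:=R_CompleteNormedModule)); auto. Qed.

Lemma ex_RInt_scal_R g c d k : ex_RInt g c d -> ex_RInt (fun t => k * g t) c d.
Proof. intros; apply (ex_RInt_scal (V:=R_NormedModule)); auto. Qed.

Lemma RInt_Chasles_R g a b c : ex_RInt g a b -> ex_RInt g b c ->
  RInt g a b + RInt g b c = RInt g a c.
Proof. intros; apply (RInt_Chasles (V:=R_CompleteNormedModule)); auto. Qed.

Lemma ex_RInt_subinterval g c d c' d' : c <= c' -> c' <= d' -> d' <= d ->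
  ex_RInt g c d -> ex_RInt g c' d'.
Proof.
  intros H1 H2 H3 H. apply (ex_RInt_Chasles_1 (V:=R_CompleteNormedModule)) with d; [lra|].
  apply (ex_RInt_Chasles_2 (V:=R_CompleteNormedModule)) with c; [lra|auto].
Qed.

Lemma RInt_split3 g c c' d' d : c <= c' -> c' <= d' -> d' <= d -> ex_RInt g c d ->
  RInt g c d = RInt g c c' + RInt g c' d' + RInt g d' d.
Proof.
  intros H1 H2 H3 H.
  assert (E1 : ex_RInt g c c') by (apply ex_RInt_subinterval with c d; lra || auto).
  assert (E2 : ex_RInt g c' d') by (apply ex_RInt_subinterval with c d; lra || auto).
  assert (E3 : ex_RInt g d' d) by (apply ex_RInt_subinterval with c d; lra || auto).
  assert (E12 : ex_RInt g c d') by (apply ex_RInt_subinterval with c d; lra || auto).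
  rewrite <- (RInt_Chasles_R g c d' d E12 E3), <- (RInt_Chasles_R g c c' d' E1 E2).
  reflexivity.
Qed.

Lemma RInt_le_subinterval g c d c' d' : c <= c' -> c' <= d' -> d' <= d -> ex_RInt g c d ->
  (forall t, c < t < d -> 0 <= g t) -> RInt g c' d' <= RInt g c d.
Proof.
  intros H1 H2 H3 H Hp. rewrite (RInt_split3 g c c' d' d) by auto.
  assert (0 <= RInt g c c').
  { apply RInt_ge_0; auto. apply ex_RInt_subinterval with c d; lra || auto.
    intros; apply Hp; lra. }
  assert (0 <= RInt g d' d).
  { apply RInt_ge_0; auto. apply ex_RInt_subinterval with c d; lra || auto.
    intros; apply Hp; lra. }
  lra.
Qed.

Lemma RInt_le_shift g h c d k : c <= d -> ex_RInt g c d -> ex_RInt h c d ->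
  (forall t, c < t < d -> g t <= h t + k) -> RInt g c d <= RInt h c d + k * (d - c).
Proof.
  intros Hcd E1 E2 H. rewrite <- RInt_const_R, <- RInt_plus_R by (auto; apply ex_RInt_const_R).
  apply RInt_le; auto. apply ex_RInt_plus_R; auto; apply ex_RInt_const_R.
Qed.

(* The integrand is bounded, so the two end slivers contribute arbitrarily little. *)
Lemma RInt_le_of_interior g c d K : c < d -> ex_RInt g c d ->
  (forall c' d', c < c' -> c' <= d' -> d' < d -> RInt g c' d' <= K) -> RInt g c d <= K.
Proof.
  intros Hcd HI HK. destruct (ex_RInt_ub g c d HI) as [M HM].
  rewrite Rmin_left, Rmax_right in HM by lra.
  assert (HM0 : 0 <= M) by (specialize (HM c ltac:(lra)); pose proof (norm_ge_0 (g c)); lra).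
  apply Rnot_lt_le; intro Hlt.
  set (eps := RInt g c d - K). assert (Heps : 0 < eps) by (unfold eps; lra).
  set (del := Rmin ((d - c) / 3) (eps / (2 * (M + 1)))).
  assert (Hdel : 0 < del) by (apply Rmin_pos; apply Rdiv_lt_0_compat; lra).
  assert (Hdel1 : del <= (d - c) / 3) by apply Rmin_l.
  assert (Hdel2 : del <= eps / (2 * (M + 1))) by apply Rmin_r.
  assert (Bound : forall u v, c <= u <= v -> v <= d -> v - u = del -> RInt g u v <= del * M).
  { intros u v Hu Hv Huv. rewrite <- Huv.
    assert (Euv : ex_RInt g u v) by (apply ex_RInt_subinterval with c d; lra || auto).
    pose proof (abs_RInt_le_const g u v M ltac:(lra) Euv ltac:(intros t Ht; apply HM; lra)).
    apply Rabs_le_between in H. lra. }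
  pose proof (RInt_split3 g c (c + del) (d - del) d ltac:(lra) ltac:(lra) ltac:(lra) HI).
  pose proof (Bound c (c + del) ltac:(lra) ltac:(lra) ltac:(ring)).
  pose proof (Bound (d - del) d ltac:(lra) ltac:(lra) ltac:(ring)).
  pose proof (HK (c + del) (d - del) ltac:(lra) ltac:(lra) ltac:(lra)).
  assert (del * M <= eps / (2 * (M + 1)) * M) by (apply Rmult_le_compat_r; lra).
  assert (eps / (2 * (M + 1)) * M = eps / 2 - eps / (2 * (M + 1))) by (field; lra).
  assert (0 < eps / (2 * (M + 1))) by (apply Rdiv_lt_0_compat; lra).
  unfold eps in *. lra.
Qed.

(** * Improper integrals of nonnegative functions *)

Definition ex_RInt_loc g a b := forall c d, a < c -> c <= d -> d < b -> ex_RInt g c d.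
Definition RInt_loc_ub g a b B := forall c d, a < c -> c <= d -> d < b -> RInt g c d <= B.

Lemma ex_RInt_loc_sub g a b a' b' : ex_RInt_loc g a b -> a <= a' -> b' <= b ->
  ex_RInt_loc g a' b'.
Proof. intros H H1 H2 c d G1 G2 G3; apply H; lra. Qed.

Lemma RInt_loc_ub_sub g a b a' b' B : RInt_loc_ub g a b B -> a <= a' -> b' <= b ->
  RInt_loc_ub g a' b' B.
Proof. intros H H1 H2 c d G1 G2 G3; apply H; lra. Qed.

Lemma RInt_loc_ub_ext g h a b B : (forall t, a < t < b -> g t = h t) ->
  RInt_loc_ub g a b B -> RInt_loc_ub h a b B.
Proof.
  intros H HB c d H1 H2 H3. rewrite <- (HB c d H1 H2 H3). right. apply RInt_ext.
  intros x Hx. rewrite Rmin_left, Rmax_right in Hx by lra. symmetry; apply H; lra.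
Qed.

Lemma RInt_is_iff g c d v : RInt_is g c d v <-> ex_RInt g c d /\ RInt g c d = v.
Proof.
  split.
  - intros [pr Hpr]. split; [apply ex_RInt_Reals_1; exact pr|].
    rewrite (RInt_Reals _ _ _ pr); auto.
  - intros [H1 H2]. exists (ex_RInt_Reals_0 _ _ _ H1). rewrite <- RInt_Reals; auto.
Qed.

Lemma compact_ints_iff g a b v : compact_ints g a b v <->
  exists c d, a < c /\ c <= d /\ d < b /\ ex_RInt g c d /\ RInt g c d = v.
Proof.
  split.
  - intros [c [d [H1 [H2 [H3 H4]]]]]. apply RInt_is_iff in H4. exists c, d; tauto.
  - intros [c [d [H1 [H2 [H3 [H4 H5]]]]]]. exists c, d. repeat split; auto.
    apply RInt_is_iff; auto.
Qed.

Section ImproperIntegral.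
Variables (g : R -> R) (a b : R).
Hypotheses (Hab : a < b) (Hloc : ex_RInt_loc g a b).

Lemma impInt_is_lub B : RInt_loc_ub g a b B -> is_lub (compact_ints g a b) (impInt g a b).
Proof.
  intros HB. apply Rsup_is_lub.
  - exists 0. apply compact_ints_iff. exists ((a + b) / 2), ((a + b) / 2).
    repeat split; try lra; [apply Hloc; lra|apply RInt_point_R].
  - exists B. intros v Hv. apply compact_ints_iff in Hv.
    destruct Hv as [c [d [H1 [H2 [H3 [H4 <-]]]]]]. apply HB; auto.
Qed.

Lemma RInt_le_impInt B c d : RInt_loc_ub g a b B ->
  a < c -> c <= d -> d < b -> RInt g c d <= impInt g a b.
Proof.
  intros HB H1 H2 H3. apply (impInt_is_lub B HB). apply compact_ints_iff.
  exists c, d. repeat split; auto.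
Qed.

Lemma impInt_le M : RInt_loc_ub g a b M -> impInt g a b <= M.
Proof.
  intros HB. apply (impInt_is_lub M HB). intros v Hv. apply compact_ints_iff in Hv.
  destruct Hv as [c [d [H1 [H2 [H3 [H4 <-]]]]]]. apply HB; auto.
Qed.

Lemma impInt_ge0 B : RInt_loc_ub g a b B -> 0 <= impInt g a b.
Proof.
  intros HB. rewrite <- (RInt_point_R g ((a + b) / 2)). apply (RInt_le_impInt B); auto; lra.
Qed.

Lemma RInt_loc_ub_impInt B : RInt_loc_ub g a b B -> RInt_loc_ub g a b (impInt g a b).
Proof. intros HB c d H1 H2 H3. apply (RInt_le_impInt B); auto. Qed.

Lemma impInt_le_exhaust M : (forall t, a < t < b -> 0 <= g t) ->
  (forall c d, a < c -> c <= d -> d < b -> exists c' d',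
     a < c' /\ c' <= c /\ d <= d' /\ d' < b /\ RInt g c' d' <= M) ->
  impInt g a b <= M.
Proof.
  intros Hnn H. apply impInt_le. intros c d H1 H2 H3.
  destruct (H c d H1 H2 H3) as [c' [d' [G1 [G2 [G3 [G4 G5]]]]]].
  eapply Rle_trans; [|exact G5]. apply RInt_le_subinterval; auto; try lra.
  - apply Hloc; lra.
  - intros; apply Hnn; lra.
Qed.

End ImproperIntegral.

Lemma impInt_ext g h a b : (forall t, a < t < b -> g t = h t) -> impInt g a b = impInt h a b.
Proof.
  intros H. unfold impInt. f_equal. apply functional_extensionality; intro v.
  apply propositional_extensionality. rewrite !compact_ints_iff.
  assert (Hcd : forall c d, a < c -> d < b -> forall x, Rmin c d < x < Rmax c d -> c <= d ->
    g x = h x).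
  { intros c d Hc Hd x Hx Hle. rewrite Rmin_left, Rmax_right in Hx by lra. apply H; lra. }
  split; intros [c [d [H1 [H2 [H3 [H4 H5]]]]]]; exists c, d; repeat split; auto.
  - eapply ex_RInt_ext; [|exact H4]. intros x Hx; apply Hcd with c d; auto.
  - rewrite <- H5. apply RInt_ext. intros x Hx; symmetry; apply Hcd with c d; auto.
  - eapply ex_RInt_ext; [|exact H4]. intros x Hx; symmetry; apply Hcd with c d; auto.
  - rewrite <- H5. apply RInt_ext. intros x Hx; apply Hcd with c d; auto.
Qed.

Lemma impInt_le_compat g h a b B : a < b -> ex_RInt_loc g a b -> ex_RInt_loc h a b ->
  RInt_loc_ub h a b B -> (forall t, a < t < b -> g t <= h t) -> impInt g a b <= impInt h a b.
Proof.
  intros Hab Hg Hh HB Hle. apply impInt_le; auto. intros c d H1 H2 H3.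
  apply Rle_trans with (RInt h c d).
  - apply RInt_le; auto; intros; apply Hle; lra.
  - apply (RInt_le_impInt h a b Hab Hh B); auto.
Qed.

Section Additivity.
Variables (g : R -> R) (a s b : R).
Hypotheses (Has : a < s) (Hsb : s < b) (Hloc : ex_RInt_loc g a b)
  (Hnn : forall t, a < t < b -> 0 <= g t).
Variables (B1 B2 : R).
Hypotheses (HB1 : RInt_loc_ub g a s B1) (HB2 : RInt_loc_ub g s b B2).

Let Hloc1 : ex_RInt_loc g a s. Proof. apply ex_RInt_loc_sub with a b; auto; lra. Qed.
Let Hloc2 : ex_RInt_loc g s b. Proof. apply ex_RInt_loc_sub with a b; auto; lra. Qed.

Lemma RInt_loc_ub_split : RInt_loc_ub g a b (impInt g a s + impInt g s b).
Proof.
  pose proof (impInt_ge0 g a s Has Hloc1 B1 HB1).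
  pose proof (impInt_ge0 g s b Hsb Hloc2 B2 HB2).
  intros c d H1 H2 H3.
  destruct (Rlt_le_dec d s) as [Hds|Hsd].
  { pose proof (RInt_le_impInt g a s Has Hloc1 B1 c d HB1 H1 H2 Hds). lra. }
  destruct (Rlt_le_dec s c) as [Hsc|Hcs].
  { pose proof (RInt_le_impInt g s b Hsb Hloc2 B2 c d HB2 Hsc H2 H3). lra. }
  assert (HI := Hloc c d H1 H2 H3).
  assert (E1 : ex_RInt g c s) by (apply ex_RInt_subinterval with c d; lra || auto).
  assert (E2 : ex_RInt g s d) by (apply ex_RInt_subinterval with c d; lra || auto).
  rewrite <- (RInt_Chasles_R g c s d E1 E2).
  assert (R1 : RInt g c s <= impInt g a s).
  { destruct (Req_dec c s) as [->|Hne]; [rewrite RInt_point_R; lra|].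
    apply RInt_le_of_interior; auto; [lra|]. intros c' d' G1 G2 G3.
    apply (RInt_le_impInt g a s Has Hloc1 B1); auto; lra. }
  assert (R2 : RInt g s d <= impInt g s b).
  { destruct (Req_dec s d) as [->|Hne]; [rewrite RInt_point_R; lra|].
    apply RInt_le_of_interior; auto; [lra|]. intros c' d' G1 G2 G3.
    apply (RInt_le_impInt g s b Hsb Hloc2 B2); auto; lra. }
  lra.
Qed.

Lemma impInt_split : impInt g a b = impInt g a s + impInt g s b.
Proof.
  assert (Hab : a < b) by lra. pose proof RInt_loc_ub_split as HB.
  apply Rle_antisym; [apply impInt_le; auto|].
  destruct (impInt_is_lub g a s Has Hloc1 B1 HB1) as [_ L1].
  destruct (impInt_is_lub g s b Hsb Hloc2 B2 HB2) as [_ L2].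
  assert (Hright : forall c2 d2, s < c2 -> c2 <= d2 -> d2 < b ->
    impInt g a s <= impInt g a b - RInt g c2 d2).
  { intros c2 d2 H1 H2 H3. apply L1. intros v Hv. apply compact_ints_iff in Hv.
    destruct Hv as [c1 [d1 [G1 [G2 [G3 [G4 <-]]]]]].
    assert (HI := Hloc c1 d2 G1 ltac:(lra) H3).
    pose proof (RInt_split3 g c1 d1 c2 d2 ltac:(lra) ltac:(lra) ltac:(lra) HI).
    assert (0 <= RInt g d1 c2).
    { apply RInt_ge_0; [lra| |intros; apply Hnn; lra].
      apply ex_RInt_subinterval with c1 d2; lra || auto. }
    pose proof (RInt_le_impInt g a b Hab Hloc _ c1 d2 HB G1 ltac:(lra) H3). lra. }
  enough (impInt g s b <= impInt g a b - impInt g a s) by lra.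
  apply L2. intros v Hv. apply compact_ints_iff in Hv.
  destruct Hv as [c [d [G1 [G2 [G3 [G4 <-]]]]]].
  pose proof (Hright c d G1 G2 G3). lra.
Qed.

End Additivity.

Section Comparison.
Variables (g h : R -> R) (a b B : R).
Hypotheses (Hab : a < b) (Hg : ex_RInt_loc g a b) (Hh : ex_RInt_loc h a b)
  (HB : RInt_loc_ub h a b B) (Hnn : forall t, a < t < b -> 0 <= g t).

(* Exhausting ]a, b[ by intervals symmetric about its midpoint makes the two
   error terms cancel exactly. *)
Lemma impInt_le_two_piece t k : a < t < b ->
  (forall u, a < u < t -> g u <= h u + k) -> (forall u, t < u < b -> g u <= h u - k) ->
  impInt g a b <= impInt h a b + k * ((t - a) - (b - t)).
Proof.
  intros Ht H1 H2. apply impInt_le_exhaust; auto. intros c0 d0 G1 G2 G3.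
  set (e := Rmin (Rmin (c0 - a) (b - d0)) (Rmin ((t - a) / 2) ((b - t) / 2))).
  assert (He : 0 < e /\ e <= c0 - a /\ e <= b - d0 /\ e <= (t - a) / 2 /\ e <= (b - t) / 2).
  { unfold e. repeat split.
    - repeat apply Rmin_pos; lra.
    - eapply Rle_trans; apply Rmin_l.
    - eapply Rle_trans; [apply Rmin_l|apply Rmin_r].
    - eapply Rle_trans; [apply Rmin_r|apply Rmin_l].
    - eapply Rle_trans; apply Rmin_r. }
  exists (a + e), (b - e). repeat split; try lra.
  assert (Sub : forall f : R -> R, ex_RInt_loc f a b -> forall u v, a + e <= u -> u <= v -> v <= b - e ->
    ex_RInt f u v).
  { intros f Hf u v Hu Huv Hv. apply ex_RInt_subinterval with (a + e) (b - e); auto; apply Hf; lra. }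
  rewrite <- (RInt_Chasles_R g (a + e) t (b - e)) by (apply Sub; auto; lra).
  pose proof (RInt_le_shift g h (a + e) t k ltac:(lra) ltac:(apply Sub; auto; lra)
    ltac:(apply Sub; auto; lra) ltac:(intros; apply H1; lra)).
  pose proof (RInt_le_shift g h t (b - e) (- k) ltac:(lra) ltac:(apply Sub; auto; lra)
    ltac:(apply Sub; auto; lra) ltac:(intros; apply H2; lra)).
  pose proof (RInt_Chasles_R h (a + e) t (b - e) ltac:(apply Sub; auto; lra)
    ltac:(apply Sub; auto; lra)).
  pose proof (RInt_le_impInt h a b Hab Hh B (a + e) (b - e) HB ltac:(lra) ltac:(lra) ltac:(lra)).
  lra.
Qed.

Lemma impInt_le_gain al be del : a < al -> al <= be -> be < b ->
  (forall u, a < u < b -> g u <= h u) -> (forall u, al < u < be -> g u + del <= h u) ->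
  impInt g a b <= B - del * (be - al).
Proof.
  intros H1 H2 H3 Hle Hgain. apply impInt_le_exhaust; auto. intros c0 d0 G1 G2 G3.
  pose proof (Rmin_l c0 al). pose proof (Rmin_r c0 al).
  pose proof (Rmax_l d0 be). pose proof (Rmax_r d0 be).
  set (c := Rmin c0 al) in *. set (d := Rmax d0 be) in *.
  assert (a < c) by (apply Rmin_glb_lt; lra). assert (d < b) by (apply Rmax_lub_lt; lra).
  exists c, d. repeat split; try lra.
  assert (HI : ex_RInt g c d) by (apply Hg; lra).
  assert (HJ : ex_RInt h c d) by (apply Hh; lra).
  assert (Sub : forall f : R -> R, ex_RInt f c d -> forall u v, c <= u -> u <= v -> v <= d -> ex_RInt f u v).
  { intros f Hf u v Hu Huv Hv. apply ex_RInt_subinterval with c d; auto. }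
  rewrite (RInt_split3 g c al be d) by (lra || auto).
  pose proof (RInt_split3 h c al be d ltac:(lra) ltac:(lra) ltac:(lra) HJ).
  assert (RInt g c al <= RInt h c al)
    by (apply RInt_le; [lra|apply Sub|apply Sub|intros; apply Hle]; auto; lra).
  assert (RInt g be d <= RInt h be d)
    by (apply RInt_le; [lra|apply Sub|apply Sub|intros; apply Hle]; auto; lra).
  pose proof (RInt_le_shift g h al be (- del) H2 ltac:(apply Sub; auto; lra)
    ltac:(apply Sub; auto; lra) ltac:(intros u Hu; specialize (Hgain u Hu); lra)).
  pose proof (HB c d ltac:(lra) ltac:(lra) ltac:(lra)).
  lra.
Qed.

End Comparison.

(** * The cost of approximating a quantile function on a block by a constant *)

Section Cost.
Variable F : R -> R.
Hypothesis HF : is_cdf F.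
Variable r : R.
Hypothesis Hr : 1 <= r.

Definition cost_integrand (y : R) : R -> R := fun t => rpow (Rabs (Finv F t - y)) r.

(* The contribution of the block ]a, b[ to [d_r^r] when the discrete quantile
   function equals [y] there. *)
Definition cost (a b y : R) : R := impInt (cost_integrand y) a b.

Lemma cost_integrand_ge0 y t : 0 <= cost_integrand y t.
Proof. apply rpow_ge0. Qed.

(* [|F^{-1} - y|^r] is the sum of a nondecreasing and a nonincreasing function. *)
Lemma ex_RInt_loc_cost_integrand y : ex_RInt_loc (cost_integrand y) 0 1.
Proof.
  intros c d H1 H2 H3.
  set (u := fun t => rpow (Rmax (Finv F t - y) 0) r).
  set (v := fun t => rpow (Rmax (y - Finv F t) 0) r).
  assert (Eu : ex_RInt u c d).
  { apply ex_RInt_nondecr; auto. intros s t G1 G2 G3. unfold u. apply rpow_le_compat; [lra|].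
    pose proof (Finv_nondecr F HF s t ltac:(lra) G2 ltac:(lra)).
    split; [apply Rmax_r|]. apply Rle_max_compat_r. lra. }
  assert (Ev : ex_RInt v c d).
  { apply ex_RInt_nonincr; auto. intros s t G1 G2 G3. unfold v. apply rpow_le_compat; [lra|].
    pose proof (Finv_nondecr F HF s t ltac:(lra) G2 ltac:(lra)).
    split; [apply Rmax_r|]. apply Rle_max_compat_r. lra. }
  assert (Hsum : forall t, u t + v t = cost_integrand y t).
  { intros t. unfold u, v, cost_integrand. destruct (Rle_dec 0 (Finv F t - y)).
    - rewrite Rmax_left, (Rmax_right (y - _)), (rpow_nonpos_base 0), Rabs_right by lra. ring.
    - rewrite Rmax_right, (Rmax_left (y - _)), (rpow_nonpos_base 0), Rabs_left by lra.
      rewrite Rplus_0_l. f_equal. ring. }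
  eapply ex_RInt_ext; [|exact (ex_RInt_plus_R u v c d Eu Ev)]. intros t _. apply Hsum.
Qed.

Lemma cost_integrand_le y t : cost_integrand y t <= rpow 2 r * (cost_integrand 0 t + rpow (Rabs y) r).
Proof.
  unfold cost_integrand. rewrite Rminus_0_r, <- (Rabs_Ropp y). apply rpow_abs_add_le; auto.
Qed.

Lemma cost_integrand_bounded y : finite_moment r F -> exists B, RInt_loc_ub (cost_integrand y) 0 1 B.
Proof.
  intros [B0 HB0]. exists (rpow 2 r * (B0 + rpow (Rabs y) r)). intros c d H1 H2 H3.
  assert (E0 := ex_RInt_loc_cost_integrand 0 c d H1 H2 H3).
  assert (Ec := ex_RInt_const_R c d (rpow (Rabs y) r)).
  assert (Hmom : RInt (cost_integrand 0) c d <= B0).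
  { apply HB0, compact_ints_iff. exists c, d. repeat split; auto; unfold cost_integrand.
    - eapply ex_RInt_ext; [|exact E0]. intros t _. unfold cost_integrand. rewrite Rminus_0_r; auto.
    - apply RInt_ext. intros t _. rewrite Rminus_0_r; auto. }
  apply Rle_trans with (RInt (fun t => rpow 2 r * (cost_integrand 0 t + rpow (Rabs y) r)) c d).
  { apply RInt_le; auto.
    - apply ex_RInt_loc_cost_integrand; auto.
    - apply ex_RInt_scal_R, ex_RInt_plus_R; auto.
    - intros; apply cost_integrand_le. }
  rewrite RInt_scal_R, RInt_plus_R, RInt_const_R by (auto; apply ex_RInt_plus_R; auto).
  pose proof (rpow_gt0 2 r ltac:(lra)). pose proof (rpow_ge0 (Rabs y) r).
  apply Rmult_le_compat_l; [lra|]. nra.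
Qed.

Section Block.
Hypothesis Hmom : finite_moment r F.
Variables a b : R.
Hypotheses (Ha : 0 <= a) (Hab : a < b) (Hb : b <= 1).
Let f := Finv F.

Lemma ex_RInt_loc_block y : ex_RInt_loc (cost_integrand y) a b.
Proof. apply ex_RInt_loc_sub with 0 1; auto. apply ex_RInt_loc_cost_integrand. Qed.

Lemma cost_integrand_block_bounded y : exists B, RInt_loc_ub (cost_integrand y) a b B.
Proof.
  destruct (cost_integrand_bounded y Hmom) as [B HB]. exists B.
  apply RInt_loc_ub_sub with 0 1; auto.
Qed.

Lemma RInt_le_cost y c d : a < c -> c <= d -> d < b -> RInt (cost_integrand y) c d <= cost a b y.
Proof.
  intros. destruct (cost_integrand_block_bounded y) as [B HB].
  apply (RInt_le_impInt _ a b Hab (ex_RInt_loc_block y) B); auto.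
Qed.

Lemma cost_ge0 y : 0 <= cost a b y.
Proof.
  destruct (cost_integrand_block_bounded y) as [B HB].
  apply (impInt_ge0 _ a b Hab (ex_RInt_loc_block y) B HB).
Qed.

Lemma cost_convex l u v : 0 <= l <= 1 ->
  cost a b (l * u + (1 - l) * v) <= l * cost a b u + (1 - l) * cost a b v.
Proof.
  intros Hl. apply impInt_le; auto; [apply ex_RInt_loc_block|]. intros c d H1 H2 H3.
  assert (Eu : ex_RInt (cost_integrand u) c d) by (apply ex_RInt_loc_block; lra).
  assert (Ev : ex_RInt (cost_integrand v) c d) by (apply ex_RInt_loc_block; lra).
  apply Rle_trans with
    (RInt (fun t => l * cost_integrand u t + (1 - l) * cost_integrand v t) c d).
  { apply RInt_le; auto.
    - apply ex_RInt_loc_block; lra.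
    - apply ex_RInt_plus_R; apply ex_RInt_scal_R; auto.
    - intros t _. apply rpow_abs_convex; auto. }
  rewrite RInt_plus_R, !RInt_scal_R by (auto; apply ex_RInt_scal_R; auto).
  pose proof (RInt_le_cost u c d H1 H2 H3). pose proof (RInt_le_cost v c d H1 H2 H3).
  apply Rplus_le_compat; apply Rmult_le_compat_l; lra.
Qed.

Lemma cost_continuity_pt y : continuity_pt (cost a b) y.
Proof. apply convex_continuity_pt. intros; apply cost_convex; auto. Qed.

Let al := a + (b - a) / 4.
Let be := b - (b - a) / 4.

Let f_bounded : exists C, 0 <= C /\ forall t, al <= t <= be -> Rabs (f t) <= C.
Proof.
  exists (Rabs (f al) + Rabs (f be)). split; [split_Rabs; lra|]. intros t Ht.
  assert (f al <= f t) by (apply Finv_nondecr; auto; unfold al, be in *; lra).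
  assert (f t <= f be) by (apply Finv_nondecr; auto; unfold al, be in *; lra).
  split_Rabs; lra.
Qed.

(* On the middle half of the block, [f] is bounded, so the cost grows at least
   linearly in [|y|]. *)
Lemma cost_coercive : exists M, 0 <= M /\ forall y, M <= Rabs y -> cost a b 0 + 1 <= cost a b y.
Proof.
  destruct f_bounded as [C [HC0 HC]].
  assert (Hw : 0 < be - al) by (unfold al, be; lra).
  pose proof (cost_ge0 0) as K0.
  assert (Hq : 0 <= (cost a b 0 + 1) / (be - al)) by (apply Rdiv_le_0_compat; lra).
  exists (C + 1 + (cost a b 0 + 1) / (be - al)). split; [lra|]. intros y Hy.
  eapply Rle_trans; [|apply (RInt_le_cost y al be); unfold al, be; lra].
  apply Rle_trans with (RInt (fun _ => Rabs y - C) al be).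
  - rewrite RInt_const_R.
    assert ((cost a b 0 + 1) / (be - al) * (be - al) = cost a b 0 + 1) by (field; lra).
    assert ((C + 1 + (cost a b 0 + 1) / (be - al) - C) * (be - al) <= (Rabs y - C) * (be - al))
      by (apply Rmult_le_compat_r; lra).
    nra.
  - apply RInt_le; [lra|apply ex_RInt_const_R|apply ex_RInt_loc_block; unfold al, be; lra|].
    intros t Ht. specialize (HC t ltac:(lra)).
    assert (Rabs y - C <= Rabs (f t - y)) by (split_Rabs; lra).
    unfold cost_integrand. fold f.
    eapply Rle_trans; [|apply rpow_ge_base; lra]. lra.
Qed.

Lemma cost_has_min : exists y, forall z, cost a b y <= cost a b z.
Proof.
  destruct cost_coercive as [M [HM0 HM]].
  destruct (continuity_ab_min (cost a b) (- M) M ltac:(lra) (fun c _ => cost_continuity_pt c))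
    as [y [Hy1 Hy2]].
  exists y. intros z. destruct (Rle_lt_dec (Rabs z) M) as [Hz|Hz].
  - apply Hy1. apply Rabs_le_between; lra.
  - specialize (HM z ltac:(lra)). specialize (Hy1 0 ltac:(lra)). lra.
Qed.

Lemma continuity_pt_rpow_abs_sub y u : continuity_pt (fun u => rpow (Rabs (u - y)) r) u.
Proof.
  apply (continuity_pt_comp (fun u => Rabs (u - y)) (fun x => rpow x r));
    [|apply rpow_continuity_pt; lra].
  apply (continuity_pt_comp (fun u => u - y) Rabs); [|apply Rcontinuity_abs].
  apply continuity_pt_minus; [apply derivable_continuous_pt, derivable_pt_id|].
  apply continuity_pt_const; intros ? ?; auto.
Qed.

(* Strict convexity of [|.|^r] gives a gap that is uniform on the compact range
   [f al, f be] of [f] over the middle half of the block. *)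
Lemma cost_min_unique : 1 < r -> forall y1 y2,
  (forall z, cost a b y1 <= cost a b z) -> (forall z, cost a b y2 <= cost a b z) -> y1 = y2.
Proof.
  intros Hr1 y1 y2 H1 H2. destruct (Req_dec y1 y2) as [E|Hne]; auto. exfalso.
  set (m := (y1 + y2) / 2).
  set (gap := fun u => (rpow (Rabs (u - y1)) r + rpow (Rabs (u - y2)) r) / 2
                       - rpow (Rabs (u - m)) r).
  assert (gap_pos : forall u, 0 < gap u)
    by (intros u; pose proof (rpow_abs_midpoint_lt r u y1 y2 Hr1 Hne); unfold gap, m; lra).
  assert (gap_cont : forall u, continuity_pt gap u).
  { intros u. unfold gap. apply continuity_pt_minus; [|apply continuity_pt_rpow_abs_sub].
    unfold Rdiv. apply continuity_pt_mult; [|apply continuity_pt_const; intros ? ?; auto].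
    apply continuity_pt_plus; apply continuity_pt_rpow_abs_sub. }
  assert (Hfab : f al <= f be) by (apply Finv_nondecr; auto; unfold al, be; lra).
  destruct (continuity_ab_min gap (f al) (f be) Hfab (fun c _ => gap_cont c)) as [u0 [Hu0 _]].
  set (avg := fun t => / 2 * (cost_integrand y1 t + cost_integrand y2 t)).
  assert (Havg : ex_RInt_loc avg a b).
  { intros c d G1 G2 G3. apply ex_RInt_scal_R, ex_RInt_plus_R; apply ex_RInt_loc_block; lra. }
  assert (Bavg : RInt_loc_ub avg a b ((cost a b y1 + cost a b y2) / 2)).
  { intros c d G1 G2 G3.
    assert (E1 : ex_RInt (cost_integrand y1) c d) by (apply ex_RInt_loc_block; lra).
    assert (E2 : ex_RInt (cost_integrand y2) c d) by (apply ex_RInt_loc_block; lra).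
    unfold avg. rewrite (RInt_scal_R _ c d _ (ex_RInt_plus_R _ _ c d E1 E2)), (RInt_plus_R _ _ c d E1 E2).
    pose proof (RInt_le_cost y1 c d G1 G2 G3). pose proof (RInt_le_cost y2 c d G1 G2 G3). lra. }
  assert (Kmid : cost a b m <= (cost a b y1 + cost a b y2) / 2 - gap u0 * (be - al)).
  { apply (impInt_le_gain _ avg a b _ Hab (ex_RInt_loc_block m) Havg Bavg
      (fun t _ => cost_integrand_ge0 m t)); [unfold al; lra|unfold al, be; lra|unfold be; lra| |].
    - intros t _. pose proof (gap_pos (f t)) as Hg.
      unfold avg, cost_integrand, gap in *. fold f. lra.
    - intros t Ht.
      assert (Hft : f al <= f t <= f be)
        by (split; apply Finv_nondecr; auto; unfold al, be in *; lra).
      pose proof (Hu0 (f t) Hft) as Hg.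
      unfold avg, cost_integrand, gap in *. fold f. lra. }
  assert (cost a b y1 = cost a b y2) by (apply Rle_antisym; auto).
  specialize (H1 m). pose proof (gap_pos u0).
  assert (0 < gap u0 * (be - al)) by (apply Rmult_lt_0_compat; unfold al, be; lra). lra.
Qed.

Lemma cost_argmin_le_Finv : 1 < r -> forall y, (forall z, cost a b y <= cost a b z) ->
  forall u, b <= u < 1 -> y <= f u.
Proof.
  intros Hr1 y Hy u Hu. apply Rnot_lt_le; intro Hlt.
  enough (forall z, cost a b (f u) <= cost a b z) by (pose proof (cost_min_unique Hr1 y (f u) Hy H); lra).
  intros z. eapply Rle_trans; [|apply Hy]. destruct (cost_integrand_block_bounded y) as [B HB].
  apply (impInt_le_compat _ _ a b B Hab (ex_RInt_loc_block _) (ex_RInt_loc_block _) HB).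
  intros t Ht. assert (f t <= f u) by (apply Finv_nondecr; auto; lra).
  unfold cost_integrand; fold f. apply rpow_le_compat; [lra|]. split_Rabs; lra.
Qed.

Lemma Finv_le_cost_argmin : 1 < r -> forall y, (forall z, cost a b y <= cost a b z) ->
  forall u, 0 < u <= a -> f u <= y.
Proof.
  intros Hr1 y Hy u Hu. apply Rnot_lt_le; intro Hlt.
  enough (forall z, cost a b (f u) <= cost a b z) by (pose proof (cost_min_unique Hr1 y (f u) Hy H); lra).
  intros z. eapply Rle_trans; [|apply Hy]. destruct (cost_integrand_block_bounded y) as [B HB].
  apply (impInt_le_compat _ _ a b B Hab (ex_RInt_loc_block _) (ex_RInt_loc_block _) HB).
  intros t Ht. assert (f u <= f t) by (apply Finv_nondecr; auto; lra).
  unfold cost_integrand; fold f. apply rpow_le_compat; [lra|]. split_Rabs; lra.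
Qed.

Section Median.
Hypothesis Hr1 : r = 1.
Let m := (a + b) / 2.

Let cost_integrand_abs y t : cost_integrand y t = Rabs (f t - y).
Proof. unfold cost_integrand. rewrite Hr1. apply rpow_1, Rabs_pos. Qed.

(* For [r = 1], replacing [y] by [z] changes [|f - y|] by exactly [+-|z - y|]
   wherever [f] lies outside the interval between [y] and [z]. *)
Let cost_le_two_piece y z t k : a < t < b ->
  (forall u, a < u < t -> Rabs (f u - y) <= Rabs (f u - z) + k) ->
  (forall u, t < u < b -> Rabs (f u - y) <= Rabs (f u - z) - k) ->
  cost a b y <= cost a b z + k * ((t - a) - (b - t)).
Proof.
  intros Ht H1 H2. destruct (cost_integrand_block_bounded z) as [B HB].
  apply (impInt_le_two_piece _ _ a b B Hab (ex_RInt_loc_block y) (ex_RInt_loc_block z) HB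
    (fun u _ => cost_integrand_ge0 y u)); auto.
  - intros u Hu. rewrite !cost_integrand_abs. auto.
  - intros u Hu. rewrite !cost_integrand_abs. auto.
Qed.

Lemma cost_min_of_median y : m <= F y -> (forall w, w < y -> F w <= m) ->
  forall z, cost a b y <= cost a b z.
Proof.
  intros Hy1 Hy2 z. destruct (Rle_lt_dec y z) as [Hyz|Hzy].
  - enough (cost a b y <= cost a b z + - (z - y) * ((m - a) - (b - m))) by (unfold m in *; lra).
    apply cost_le_two_piece; [unfold m; lra| |].
    + intros u Hu. assert (f u <= y) by (apply Finv_le; auto; unfold m in *; lra).
      split_Rabs; lra.
    + intros u Hu. split_Rabs; lra.
  - enough (cost a b y <= cost a b z + (y - z) * ((m - a) - (b - m))) by (unfold m in *; lra).
    apply cost_le_two_piece; [unfold m; lra| |].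
    + intros u Hu. split_Rabs; lra.
    + intros u Hu. assert (y <= f u).
      { apply Rnot_lt_le; intro Hlt.
        assert (F ((f u + y) / 2) <= m) by (apply Hy2; lra).
        assert ((f u + y) / 2 <= f u) by (apply Finv_ge; auto; unfold m in *; lra). lra. }
      split_Rabs; lra.
Qed.

Lemma median_of_cost_min y : (forall z, cost a b y <= cost a b z) ->
  m <= F y /\ forall w, w < y -> F w <= m.
Proof.
  intros Hmin. split.
  - apply Rnot_lt_le; intro Hlt.
    set (t := (Rmax (F y) a + m) / 2).
    pose proof (Rmax_l (F y) a). pose proof (Rmax_r (F y) a).
    assert (Hmax : Rmax (F y) a < m) by (apply Rmax_lub_lt; unfold m in *; lra).
    assert (Hyz : y < f t) by (apply Finv_gt; auto; unfold t, m in *; lra).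
    assert (cost a b (f t) <= cost a b y + (f t - y) * ((t - a) - (b - t))).
    { apply cost_le_two_piece; [unfold t, m in *; lra| |].
      - intros u Hu. split_Rabs; lra.
      - intros u Hu. assert (f t <= f u) by (apply Finv_nondecr; auto; unfold t, m in *; lra).
        split_Rabs; lra. }
    specialize (Hmin (f t)).
    assert (0 < (f t - y) * (b + a - 2 * t)) by (apply Rmult_lt_0_compat; unfold t, m in *; lra).
    lra.
  - intros w Hw. apply Rnot_lt_le; intro Hlt.
    set (t := (m + Rmin (F w) b) / 2).
    pose proof (Rmin_l (F w) b). pose proof (Rmin_r (F w) b).
    assert (Hmin' : m < Rmin (F w) b) by (apply Rmin_glb_lt; unfold m in *; lra).
    assert (cost a b w <= cost a b y + - (y - w) * ((t - a) - (b - t))).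
    { apply cost_le_two_piece; [unfold t, m in *; lra| |].
      - intros u Hu. assert (f u <= w) by (apply Finv_le; auto; unfold t, m in *; lra).
        split_Rabs; lra.
      - intros u Hu. split_Rabs; lra. }
    specialize (Hmin w).
    assert (0 < (y - w) * (2 * t - a - b)) by (apply Rmult_lt_0_compat; unfold t, m in *; lra).
    lra.
Qed.

End Median.

End Block.

End Cost.

(** * Quantile function of a discrete measure *)

Section Discrete.
Variables (n : nat) (p x : nat -> R).
Hypothesis Hp : forall i, (1 <= i <= n)%nat -> 0 <= p i.
Hypothesis Hx : in_Xi n x.

Lemma Psum_le i k : (i <= k <= n)%nat -> Psum p i <= Psum p k.
Proof.
  intros [H1 H2]. induction k as [|k IH].
  - replace i with 0%nat by lia. lra.
  - destruct (Nat.eq_dec i (S k)) as [->|Hne]; [lra|].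
    simpl. specialize (IH ltac:(lia) ltac:(lia)). pose proof (Hp (S k) ltac:(lia)). lra.
Qed.

Lemma Psum_ge0 k : (k <= n)%nat -> 0 <= Psum p k.
Proof. intros; change 0 with (Psum p 0); apply Psum_le; lia. Qed.

Lemma in_Xi_le i j : (1 <= i)%nat -> (i <= j <= n)%nat -> x i <= x j.
Proof.
  intros H1 [H2 H3]. induction j as [|j IH]; [lia|].
  destruct (Nat.eq_dec i (S j)) as [->|Hne]; [lra|].
  specialize (IH ltac:(lia) ltac:(lia)). pose proof (Hx j ltac:(lia) ltac:(lia)). lra.
Qed.

Lemma disc_cdf_all_atoms_le k z : (forall j, (1 <= j <= k)%nat -> x j <= z) ->
  disc_cdf k p x z = Psum p k.
Proof.
  induction k as [|k IH]; intros H; simpl; auto.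
  rewrite IH by (intros; apply H; lia). destruct (Rle_dec (x (S k)) z) as [_|Hn]; auto.
  exfalso; apply Hn, H; lia.
Qed.

Lemma disc_cdf_le_more_atoms i k z : (i <= k <= n)%nat -> disc_cdf i p x z <= disc_cdf k p x z.
Proof.
  intros [H1 H2]. induction k as [|k IH].
  - replace i with 0%nat by lia. lra.
  - destruct (Nat.eq_dec i (S k)) as [->|Hne]; [lra|].
    simpl. specialize (IH ltac:(lia) ltac:(lia)). pose proof (Hp (S k) ltac:(lia)).
    destruct (Rle_dec (x (S k)) z); lra.
Qed.

Lemma disc_cdf_atoms_above i k z : (i <= k)%nat -> (forall j, (i < j <= k)%nat -> z < x j) ->
  disc_cdf k p x z = disc_cdf i p x z.
Proof.
  intros H1 H. induction k as [|k IH].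
  - replace i with 0%nat by lia. auto.
  - destruct (Nat.eq_dec i (S k)) as [->|Hne]; [auto|].
    simpl. rewrite IH by (lia || (intros; apply H; lia)).
    destruct (Rle_dec (x (S k)) z); [|ring]. specialize (H (S k) ltac:(lia)). lra.
Qed.

Lemma disc_cdf_le_Psum k z : (k <= n)%nat -> disc_cdf k p x z <= Psum p k.
Proof.
  induction k as [|k IH]; intros H; simpl; [lra|].
  specialize (IH ltac:(lia)). pose proof (Hp (S k) ltac:(lia)).
  destruct (Rle_dec (x (S k)) z); lra.
Qed.

Lemma Finv_disc_cdf i t : (1 <= i <= n)%nat -> Psum p (i - 1) <= t < Psum p i ->
  Finv (disc_cdf n p x) t = x i.
Proof.
  intros Hi Ht. set (S := fun z => disc_cdf n p x z <= t).
  assert (HS : forall z, S z <-> z < x i).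
  { intros z; unfold S; split.
    - intros Hz. apply Rnot_le_lt; intro Hle.
      pose proof (disc_cdf_le_more_atoms i n z ltac:(lia)).
      rewrite (disc_cdf_all_atoms_le i z) in H
        by (intros j Hj; pose proof (in_Xi_le j i ltac:(lia) ltac:(lia)); lra).
      lra.
    - intros Hz. rewrite (disc_cdf_atoms_above (i - 1) n z)
        by (lia || (intros j Hj; pose proof (in_Xi_le i j ltac:(lia) ltac:(lia)); lra)).
      pose proof (disc_cdf_le_Psum (i - 1) z ltac:(lia)). lra. }
  assert (L1 : is_lub S (x i)).
  { split.
    - intros z Hz; apply HS in Hz; lra.
    - intros c Hc. apply Rnot_lt_le; intro Hlt.
      assert (S ((c + x i) / 2)) by (apply HS; lra). specialize (Hc _ H). lra. }
  assert (L2 : is_lub S (Rsup S)).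
  { apply Rsup_is_lub; [exists (x i - 1); apply HS; lra|exists (x i); apply L1]. }
  exact (is_lub_u _ _ _ L2 L1).
Qed.

End Discrete.

(** * Decomposition of the distance into block costs *)

Fixpoint block_sum (p : nat -> R) (C : R -> R -> R -> R) (x : nat -> R) (k : nat) : R :=
  match k with
  | O => 0
  | S j => block_sum p C x j +
      (if Rlt_dec (Psum p j) (Psum p (S j)) then C (Psum p j) (Psum p (S j)) (x (S j)) else 0)
  end.

Section BlockSum.
Variables (p : nat -> R) (C : R -> R -> R -> R).

Let block_term_le (x y : nat -> R) k :
  (Psum p k < Psum p (S k) -> C (Psum p k) (Psum p (S k)) (x (S k)) <=
     C (Psum p k) (Psum p (S k)) (y (S k))) ->
  (if Rlt_dec (Psum p k) (Psum p (S k)) then C (Psum p k) (Psum p (S k)) (x (S k)) else 0) <=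
  (if Rlt_dec (Psum p k) (Psum p (S k)) then C (Psum p k) (Psum p (S k)) (y (S k)) else 0).
Proof. destruct (Rlt_dec (Psum p k) (Psum p (S k))); auto; lra. Qed.

Let block_hyp_pred (P : nat -> Prop) k :
  (forall i, (1 <= i <= S k)%nat -> P i) -> (forall i, (1 <= i <= k)%nat -> P i).
Proof. intros H i Hi; apply H; lia. Qed.

Lemma block_sum_le x y k :
  (forall i, (1 <= i <= k)%nat -> Psum p (i - 1) < Psum p i ->
     C (Psum p (i - 1)) (Psum p i) (x i) <= C (Psum p (i - 1)) (Psum p i) (y i)) ->
  block_sum p C x k <= block_sum p C y k.
Proof.
  induction k as [|k IH]; intros H; cbn [block_sum]; [lra|].
  pose proof (IH (block_hyp_pred _ k H)) as Hk.
  pose proof (block_term_le x y k) as Hlast. specialize (H (S k) ltac:(lia)).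
  replace (S k - 1)%nat with k in H by lia. specialize (Hlast H). lra.
Qed.

Lemma block_sum_ge0 x k :
  (forall i, (1 <= i <= k)%nat -> Psum p (i - 1) < Psum p i -> 0 <= C (Psum p (i - 1)) (Psum p i) (x i)) ->
  0 <= block_sum p C x k.
Proof.
  induction k as [|k IH]; intros H; cbn [block_sum]; [lra|].
  pose proof (IH (block_hyp_pred _ k H)) as Hk. specialize (H (S k) ltac:(lia)).
  replace (S k - 1)%nat with k in H by lia.
  destruct (Rlt_dec (Psum p k) (Psum p (S k))) as [Hl|]; [specialize (H Hl)|]; lra.
Qed.

Lemma block_sum_eq_blockwise x y k :
  (forall i, (1 <= i <= k)%nat -> Psum p (i - 1) < Psum p i ->
     C (Psum p (i - 1)) (Psum p i) (y i) <= C (Psum p (i - 1)) (Psum p i) (x i)) ->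
  block_sum p C x k <= block_sum p C y k ->
  forall i, (1 <= i <= k)%nat -> Psum p (i - 1) < Psum p i ->
     C (Psum p (i - 1)) (Psum p i) (x i) = C (Psum p (i - 1)) (Psum p i) (y i).
Proof.
  induction k as [|k IH]; intros H Hs i Hi Hb; [lia|].
  pose proof (block_sum_le y x k (block_hyp_pred _ k H)) as Hk.
  pose proof (block_term_le y x k) as Hlast. cbn [block_sum] in Hs.
  assert (Hlast' := H (S k) ltac:(lia)). replace (S k - 1)%nat with k in Hlast' by lia.
  specialize (Hlast Hlast').
  destruct (Nat.eq_dec i (S k)) as [->|Hne].
  - replace (S k - 1)%nat with k in * by lia.
    revert Hs Hlast. destruct (Rlt_dec (Psum p k) (Psum p (S k))) as [Hl|Hl]; [|lra].
    specialize (Hlast' Hl). intros. lra.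
  - apply (IH (block_hyp_pred _ k H)); auto; [lra|lia].
Qed.

End BlockSum.

Lemma block_sum_zero p C x k : (forall j, (1 <= j <= k)%nat -> 0 <= p j) -> Psum p k = 0 ->
  block_sum p C x k = 0.
Proof.
  induction k as [|k IH]; intros Hp Hk; simpl; auto.
  assert (0 <= Psum p k) by (apply (Psum_ge0 k p (fun j H => Hp j ltac:(lia))); lia).
  simpl in Hk. pose proof (Hp (S k) ltac:(lia)).
  rewrite IH; auto; [|intros; apply Hp; lia|lra].
  destruct (Rlt_dec (Psum p k) (Psum p k + p (S k))); lra.
Qed.

Section Decomposition.
Variable F : R -> R.
Hypothesis HF : is_cdf F.
Variable r : R.
Hypothesis Hr : 1 <= r.
Hypothesis Hmom : finite_moment r F.
Variables (n : nat) (p x : nat -> R).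
Hypothesis HPi : in_Pi n p.
Hypothesis Hx : in_Xi n x.

Let Hp : forall i, (1 <= i <= n)%nat -> 0 <= p i.
Proof. apply HPi. Qed.

Let Psum_le_1 k : (k <= n)%nat -> Psum p k <= 1.
Proof. intros. destruct HPi as [_ E]. rewrite <- E. apply (Psum_le n p Hp); lia. Qed.

Let dist_integrand := fun t => rpow (Rabs (Finv (disc_cdf n p x) t - Finv F t)) r.

Let dist_integrand_block i t : (1 <= i <= n)%nat -> Psum p (i - 1) <= t < Psum p i ->
  dist_integrand t = cost_integrand F r (x i) t.
Proof.
  intros Hi Ht. unfold dist_integrand, cost_integrand.
  rewrite (Finv_disc_cdf n p x Hp Hx i t Hi Ht), Rabs_minus_sym. reflexivity.
Qed.

Let ex_RInt_dist_integrand_upto k : (k <= n)%nat ->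
  forall c d, 0 < c -> c <= d -> d <= Psum p k -> d < 1 -> ex_RInt dist_integrand c d.
Proof.
  induction k as [|k IH]; intros Hk c d H1 H2 H3 H4; [simpl in H3; lra|].
  assert (Hblock : forall c d, Psum p k <= c -> 0 < c -> c <= d -> d <= Psum p (S k) -> d < 1 ->
    ex_RInt dist_integrand c d).
  { intros c' d' G1 G2 G3 G4 G5.
    eapply ex_RInt_ext; [|apply (ex_RInt_loc_cost_integrand F HF r Hr (x (S k))); eauto; lra].
    intros t Ht. rewrite Rmin_left, Rmax_right in Ht by lra.
    symmetry; apply dist_integrand_block; [lia|]. replace (S k - 1)%nat with k by lia. lra. }
  destruct (Rle_lt_dec d (Psum p k)) as [Hda|Had]; [apply IH; lia || lra|].
  destruct (Rle_lt_dec (Psum p k) c) as [Hac|Hca]; [apply Hblock; lra|].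
  apply (ex_RInt_Chasles (V:=R_NormedModule)) with (Psum p k); [apply IH; lia || lra|apply Hblock; lra].
Qed.

Let ex_RInt_loc_dist_integrand : ex_RInt_loc dist_integrand 0 1.
Proof.
  intros c d H1 H2 H3. apply (ex_RInt_dist_integrand_upto n); auto; try lra.
  destruct HPi as [_ ->]. lra.
Qed.

Let impInt_dist_integrand_upto k : (k <= n)%nat -> 0 < Psum p k ->
  RInt_loc_ub dist_integrand 0 (Psum p k) (block_sum p (cost F r) x k) /\
  impInt dist_integrand 0 (Psum p k) = block_sum p (cost F r) x k.
Proof.
  induction k as [|k IH]; intros Hk HPk; [simpl in HPk; lra|].
  assert (HP0 := Psum_ge0 n p Hp k ltac:(lia)). assert (HP1 := Psum_le_1 (S k) Hk).
  cbn [block_sum] in *.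
  destruct (Rlt_dec (Psum p k) (Psum p (S k))) as [Hlt|Hnlt].
  2: { assert (E : Psum p (S k) = Psum p k) by (pose proof (Hp (S k) ltac:(lia)); simpl in *; lra).
       rewrite E, Rplus_0_r in *. apply IH; auto; lia. }
  set (a := Psum p k) in *. set (b := Psum p (S k)) in *.
  assert (Hblock : forall t, a < t < b -> dist_integrand t = cost_integrand F r (x (S k)) t).
  { intros t Ht. apply dist_integrand_block; [lia|]. replace (S k - 1)%nat with k by lia.
    unfold a, b in *; lra. }
  assert (Eblock : impInt dist_integrand a b = cost F r a b (x (S k))) by (apply impInt_ext; auto).
  destruct (cost_integrand_block_bounded F HF r Hr Hmom a b HP0 HP1 (x (S k))) as [B HB].
  assert (HBblock : RInt_loc_ub dist_integrand a b (cost F r a b (x (S k)))).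
  { apply RInt_loc_ub_ext with (cost_integrand F r (x (S k))); [intros; symmetry; auto|].
    apply (RInt_loc_ub_impInt _ a b Hlt (ex_RInt_loc_block F HF r Hr a b HP0 HP1 _) B HB). }
  assert (Hloc : ex_RInt_loc dist_integrand 0 b)
    by (apply ex_RInt_loc_sub with 0 1; [exact ex_RInt_loc_dist_integrand|lra|lra]).
  destruct (Req_dec a 0) as [Ha0|Ha0].
  - rewrite (block_sum_zero p (cost F r) x k), Rplus_0_l by (auto || (intros; apply Hp; lia)).
    rewrite Ha0 in *. auto.
  - destruct (IH ltac:(lia) ltac:(lra)) as [IB IE].
    pose proof (impInt_split dist_integrand 0 a b ltac:(lra) Hlt Hloc
      (fun t _ => rpow_ge0 _ r) _ _ IB HBblock) as Esplit.
    pose proof (RInt_loc_ub_split dist_integrand 0 a b ltac:(lra) Hlt Hloc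
      _ _ IB HBblock) as Bsplit.
    rewrite IE, Eblock in Esplit, Bsplit. auto.
Qed.

Lemma d_r_block_sum : d_r r (disc_cdf n p x) F = rpow (block_sum p (cost F r) x n) (1 / r).
Proof.
  unfold d_r. f_equal. destruct HPi as [_ E].
  destruct (impInt_dist_integrand_upto n (le_n n) ltac:(lra)) as [_ H].
  rewrite E in H. exact H.
Qed.

End Decomposition.

(** * Minimizers *)

Lemma lower_bound_upto (v : nat -> R) n : exists L, forall j, (1 <= j <= n)%nat -> L <= v j.
Proof.
  induction n as [|n [L HL]]; [exists 0; intros; lia|].
  exists (Rmin L (v (S n))). intros j Hj. destruct (Nat.eq_dec j (S n)) as [->|Hne].
  - apply Rmin_r.
  - eapply Rle_trans; [apply Rmin_l|apply HL; lia].
Qed.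

Fixpoint running_max (L : R) (w : nat -> R) (k : nat) : R :=
  match k with O => L | S j => Rmax (running_max L w j) (w (S j)) end.

(* Running maximum of the prescribed values, started below all of them. *)
Lemma in_Xi_extend n (P : nat -> Prop) (v : nat -> R) :
  (forall i j, (1 <= i)%nat -> (i < j)%nat -> (j <= n)%nat -> P i -> P j -> v i <= v j) ->
  exists x, in_Xi n x /\ forall i, (1 <= i <= n)%nat -> P i -> x i = v i.
Proof.
  intros Hord. destruct (lower_bound_upto v n) as [L HL].
  set (w := fun i => if excluded_middle_informative (P i) then v i else L).
  exists (running_max L w). split.
  - intros i H1 H2. apply Rmax_l.
  - intros i Hi HPi.
    assert (Hup : forall k, (k <= i)%nat -> running_max L w k <= v i).
    { induction k as [|k IH]; intros Hk; simpl; [apply HL; lia|].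
      apply Rmax_lub; [apply IH; lia|]. unfold w.
      destruct (excluded_middle_informative (P (S k))) as [HP|]; [|apply HL; lia].
      destruct (Nat.eq_dec (S k) i) as [->|Hne]; [lra|]. apply Hord; auto; lia. }
    apply Rle_antisym; [apply Hup; lia|].
    destruct i as [|i]; [lia|]. simpl. eapply Rle_trans; [|apply Rmax_r]. unfold w.
    destruct (excluded_middle_informative (P (S i))); [lra|contradiction].
Qed.

Section Minimizers.
Variable F : R -> R.
Hypothesis HF : is_cdf F.
Variable r : R.
Hypothesis Hr : 1 <= r.
Hypothesis Hmom : finite_moment r F.
Variables (n : nat) (p : nat -> R).
Hypothesis HPi : in_Pi n p.

Let Hp : forall i, (1 <= i <= n)%nat -> 0 <= p i.
Proof. apply HPi. Qed.

Definition block_optimal (x : nat -> R) := forall i, (1 <= i <= n)%nat ->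
  Psum p (i - 1) < Psum p i ->
  forall z, cost F r (Psum p (i - 1)) (Psum p i) (x i) <= cost F r (Psum p (i - 1)) (Psum p i) z.

Lemma block_in_unit i : (1 <= i <= n)%nat -> 0 <= Psum p (i - 1) /\ Psum p i <= 1.
Proof.
  intros Hi. split; [apply (Psum_ge0 n p Hp); lia|].
  destruct HPi as [_ E]. rewrite <- E. apply (Psum_le n p Hp); lia.
Qed.

Let block_cost_sum_ge0 x : 0 <= block_sum p (cost F r) x n.
Proof.
  apply block_sum_ge0. intros i Hi Hb. destruct (block_in_unit i Hi).
  apply (cost_ge0 F HF r Hr Hmom); auto.
Qed.

(* [d_r] is an increasing function of the sum of the block costs, and [xs]
   minimizes all of them at once. *)
Lemma minimizer_iff_block_optimal xs : in_Xi n xs -> block_optimal xs ->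
  forall x, in_Xi n x -> is_minimizer r F n p x <-> block_optimal x.
Proof.
  intros Hxs Hopt x Hx. assert (Hr' : 0 < 1 / r) by (apply Rdiv_lt_0_compat; lra).
  split.
  - intros Hmin. specialize (Hmin xs Hxs).
    rewrite !(d_r_block_sum F HF r Hr Hmom n p) in Hmin by auto.
    apply rpow_le_reg in Hmin; [|auto|apply block_cost_sum_ge0].
    assert (Heq := block_sum_eq_blockwise p (cost F r) x xs n
      (fun i Hi Hb => Hopt i Hi Hb (x i)) Hmin).
    intros i Hi Hb z. rewrite (Heq i Hi Hb). apply Hopt; auto.
  - intros Hb y Hy. rewrite !(d_r_block_sum F HF r Hr Hmom n p) by auto.
    apply rpow_le_compat; auto. split; [apply block_cost_sum_ge0|].
    apply block_sum_le. intros i Hi Hbl. apply Hb; auto.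
Qed.

Lemma block_optimal_iff_in_Q : r = 1 -> forall x, block_optimal x <->
  forall i, (1 <= i <= n)%nat -> Psum p (i - 1) < Psum p i ->
    in_Q F ((Psum p (i - 1) + Psum p i) / 2) (x i).
Proof.
  intros Hr1 x. split.
  - intros Hb i Hi Hbi. destruct (block_in_unit i Hi).
    apply in_Q_iff; auto; [lra|].
    apply (median_of_cost_min F HF r Hr Hmom); auto.
  - intros HQ i Hi Hbi z. destruct (block_in_unit i Hi).
    specialize (HQ i Hi Hbi). apply in_Q_iff in HQ as [HQ1 HQ2]; auto; [|lra].
    apply (cost_min_of_median F HF r Hr Hmom); auto.
Qed.

Lemma cost_argmin_iff_tau a b : 1 < r -> 0 <= a -> a < b -> b <= 1 -> forall y,
  (forall z, cost F r a b y <= cost F r a b z) <-> y = tau r a b (Finv F).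
Proof.
  intros Hr1 Ha Hab Hb y.
  destruct (cost_has_min F HF r Hr Hmom a b Ha Hab Hb) as [ys Hys].
  assert (Hr' : 0 < 1 / r) by (apply Rdiv_lt_0_compat; lra).
  assert (ELr : forall t, Lr_dist r a b (Finv F) t = rpow (cost F r a b t) (1 / r)) by reflexivity.
  pose proof (cost_ge0 F HF r Hr Hmom a b Ha Hab Hb) as K0.
  pose proof (cost_min_unique F HF r Hr Hmom a b Ha Hab Hb Hr1) as Huniq.
  assert (Uys : is_unique_min r a b (Finv F) ys).
  { split.
    - intros s. rewrite !ELr. apply rpow_le_compat; auto.
    - intros s Hs. apply Huniq; auto. intros z. specialize (Hs z).
      rewrite !ELr in Hs. apply rpow_le_reg in Hs; auto. }
  assert (Ut : is_unique_min r a b (Finv F) (tau r a b (Finv F)))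
    by (unfold tau; apply epsilon_spec; exists ys; auto).
  assert (Ets : tau r a b (Finv F) = ys) by (apply (proj2 Uys), (proj1 Ut)).
  rewrite Ets. split; [intros; apply Huniq; auto|intros ->; auto].
Qed.

Lemma block_optimal_iff_tau : 1 < r -> forall x, block_optimal x <->
  forall i, (1 <= i <= n)%nat -> Psum p (i - 1) < Psum p i ->
    x i = tau r (Psum p (i - 1)) (Psum p i) (Finv F).
Proof.
  intros Hr1 x. split.
  - intros Hb i Hi Hbi. destruct (block_in_unit i Hi).
    apply cost_argmin_iff_tau; auto.
  - intros HT i Hi Hbi z. destruct (block_in_unit i Hi).
    apply cost_argmin_iff_tau; auto.
Qed.

(* For [r > 1] the blockwise minimizers are automatically ordered, since the
   minimizer on a block lies between the values of [F^{-1}] at its endpoints. *)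
Lemma block_optimal_exists : exists xs, in_Xi n xs /\ block_optimal xs.
Proof.
  set (blk := fun i => Psum p (i - 1) < Psum p i).
  assert (Hgap : forall i j, (1 <= i)%nat -> (i < j)%nat -> (j <= n)%nat -> blk j ->
    0 <= Psum p (i - 1) /\ Psum p i <= Psum p (j - 1) /\ Psum p (j - 1) < Psum p j <= 1).
  { intros i j Hi Hij Hjn Hbj. destruct (block_in_unit i ltac:(lia)).
    destruct (block_in_unit j ltac:(lia)).
    assert (Psum p i <= Psum p (j - 1)) by (apply (Psum_le n p Hp); lia). auto. }
  destruct (Rle_lt_or_eq_dec 1 r Hr) as [Hr1|Hr1].
  - set (v := fun i => epsilon (inhabits 0) (fun y => forall z,
      cost F r (Psum p (i - 1)) (Psum p i) y <= cost F r (Psum p (i - 1)) (Psum p i) z)).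
    assert (Hv : forall i, (1 <= i <= n)%nat -> blk i -> forall z,
      cost F r (Psum p (i - 1)) (Psum p i) (v i) <= cost F r (Psum p (i - 1)) (Psum p i) z).
    { intros i Hi Hb. destruct (block_in_unit i Hi). apply epsilon_spec.
      apply (cost_has_min F HF r Hr Hmom); auto. }
    destruct (in_Xi_extend n blk v) as [xs [Hxs Hxv]].
    + intros i j Hi Hij Hjn Hbi Hbj.
      destruct (Hgap i j Hi Hij Hjn Hbj) as [G1 [G2 G3]].
      destruct (block_in_unit i ltac:(lia)). destruct (block_in_unit j ltac:(lia)).
      unfold blk in *.
      pose proof (cost_argmin_le_Finv F HF r Hr Hmom (Psum p (i - 1)) (Psum p i) G1 Hbi
        ltac:(lra) Hr1 (v i) (Hv i ltac:(lia) Hbi) (Psum p i) ltac:(lra)).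
      pose proof (Finv_le_cost_argmin F HF r Hr Hmom (Psum p (j - 1)) (Psum p j) ltac:(lra) Hbj
        ltac:(lra) Hr1 (v j) (Hv j ltac:(lia) Hbj) (Psum p (j - 1)) ltac:(lra)).
      pose proof (Finv_nondecr F HF (Psum p i) (Psum p (j - 1)) ltac:(lra) ltac:(lra) ltac:(lra)).
      lra.
    + exists xs. split; auto. intros i Hi Hb z. rewrite Hxv by auto. apply Hv; auto.
  - set (v := fun i => Finv F ((Psum p (i - 1) + Psum p i) / 2)).
    destruct (in_Xi_extend n blk v) as [xs [Hxs Hxv]].
    + intros i j Hi Hij Hjn Hbi Hbj.
      destruct (Hgap i j Hi Hij Hjn Hbj) as [G1 [G2 G3]].
      unfold blk, v in *. apply Finv_nondecr; auto; lra.
    + exists xs. split; auto. apply block_optimal_iff_in_Q; auto.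
      intros i Hi Hb. rewrite Hxv by auto. destruct (block_in_unit i Hi).
      apply Finv_in_Q; auto. unfold blk in Hb. lra.
Qed.

End Minimizers.

Theorem theorem5p4 (r : R) (F : R -> R) (n : nat) (p : nat -> R) :
  1 <= r -> is_cdf F -> finite_moment r F -> in_Pi n p ->
  (exists x, in_Xi n x /\ is_minimizer r F n p x) /\
  (r = 1 -> forall x, in_Xi n x ->
     (is_minimizer r F n p x <->
      forall i, (1 <= i <= n)%nat -> Psum p (i - 1) < Psum p i ->
        in_Q F ((Psum p (i - 1) + Psum p i) / 2) (x i))) /\
  (1 < r -> forall x, in_Xi n x ->
     (is_minimizer r F n p x <->
      forall i, (1 <= i <= n)%nat -> Psum p (i - 1) < Psum p i ->
        x i = tau r (Psum p (i - 1)) (Psum p i) (Finv F))).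
Proof.
  intros Hr HF Hmom HPi.
  destruct (block_optimal_exists F HF r Hr Hmom n p HPi) as [xs [Hxs Hopt]].
  pose proof (minimizer_iff_block_optimal F HF r Hr Hmom n p HPi xs Hxs Hopt) as Hiff.
  split; [|split].
  - exists xs. split; auto. apply Hiff; auto.
  - intros Hr1 x Hx. rewrite (Hiff x Hx). apply block_optimal_iff_in_Q; auto.
  - intros Hr1 x Hx. rewrite (Hiff x Hx). apply block_optimal_iff_tau; auto.
Qed.
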